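(* Let $D=\{x\in\mathbb{R}^m:\|x\|_\infty\le\rho\}$, $r\ge1$, let $B_0,\ldots,B_N$ be real $d\times d$ matrices with $B_0$ invertible, and let $\Lambda$ be a real $m\times m$ matrix. Suppose there is a real number $\mu$ with (1) $\|\Lambda\|^r\le\mu<1$, and (2) $\sum_{i=1}^N\mu^i\|B_0^{-1}B_i\|<1$. Then the linear operator $\mathcal{L}:H_r\to H_r$, $\mathcal{L}\varphi=\sum_{j=0}^NB_j(\varphi\circ\Lambda^j)$, is well defined and invertible with bounded inverse.
   Context: $\|\cdot\|_\infty$ is the sup norm on $\mathbb{R}^m$ and $\mathbb{R}^d$; matrix norms are the corresponding operator norms. For a $k$-linear map $B$, $\|B\|=\sup\{\|B(\xi_1,\ldots,\xi_k)\|_\infty:\|\xi_i\|_\infty=1\}$. $H_r=\{P\in C^r(D,\mathbb{R}^d): D^iP(0)=0 \text{ for } 0\le i\le r-1\}$, a Banach space with the norm $\|P\|'_r=\sup_{x\in D}\|D^rP(x)\|$. ($\mathcal{L}$ is the derivative at $0$ of the parameterization operator $\Phi(P)(z)=Z(P(z),P(\Lambda z),\ldots,P(\Lambda^Nz))$ when $B_j=\partial_jZ(0)$.) *)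

From mathcomp Require Import ssreflect ssrfun ssrbool eqtype ssrnat seq fintype bigop.
From Stdlib Require Import Reals ClassicalEpsilon.
Set Implicit Arguments. Unset Strict Implicit.
Open Scope R_scope.

Definition vec (n : nat) := 'I_n -> R.
Definition mat (n p : nat) := 'I_n -> 'I_p -> R.

Definition vadd {n} (x y : vec n) : vec n := fun i => x i + y i.
Definition vsub {n} (x y : vec n) : vec n := fun i => x i - y i.
Definition vscale {n} (a : R) (x : vec n) : vec n := fun i => a * x i.
Definition vzero {n} : vec n := fun _ => 0.

Definition vnorm {n} (x : vec n) : R := \big[Rmax/0]_(i < n) Rabs (x i).

Definition mv {n p} (A : mat n p) (x : vec p) : vec n :=
  fun i => \big[Rplus/0]_(j < p) (A i j * x j).
Definition mmul {n p q} (A : mat n p) (B : mat p q) : mat n q :=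
  fun i k => \big[Rplus/0]_(j < p) (A i j * B j k).
Definition mid {n} : mat n n := fun i j => if i == j then 1 else 0.
Fixpoint mpow {n} (A : mat n n) (k : nat) : mat n n :=
  match k with O => mid | S k' => mmul A (mpow A k') end.

Definition Rsup (E : R -> Prop) : R := epsilon (inhabits 0) (fun s => is_lub E s).

(* operator norm of a matrix w.r.t. the sup norms
   (0 is added to the set only to cover the degenerate case p = 0) *)
Definition opnorm {n p} (A : mat n p) : R :=
  Rsup (fun t => t = 0 \/ exists x : vec p, vnorm x = 1 /\ t = vnorm (mv A x)).

(* A k-linear map (R^m)^k -> R^d is represented as a map on sequences
   xi : nat -> vec m, of which only xi 0, ..., xi (k-1) are used. *)
Definition mlmap (m d : nat) := (nat -> vec m) -> vec d.

Definition upd {m} (xi : nat -> vec m) (i : nat) (u : vec m) : nat -> vec m :=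
  fun j => if Nat.eqb j i then u else xi j.
Definition scons {m} (h : vec m) (xi : nat -> vec m) : nat -> vec m :=
  fun j => match j with O => h | S j' => xi j' end.

Definition is_multilinear {m d} (k : nat) (T : mlmap m d) : Prop :=
  (forall xi xi' : nat -> vec m, (forall i, (i < k)%nat -> xi i = xi' i) -> T xi = T xi') /\
  (forall (xi : nat -> vec m) (i : nat) (a b : R) (u v : vec m), (i < k)%nat ->
     T (upd xi i (vadd (vscale a u) (vscale b v))) =
     vadd (vscale a (T (upd xi i u))) (vscale b (T (upd xi i v)))).

Definition mlnorm {m d} (k : nat) (T : mlmap m d) : R :=
  Rsup (fun t => t = 0 \/ exists xi : nat -> vec m,
          (forall i, (i < k)%nat -> vnorm (xi i) = 1) /\ t = vnorm (T xi)).

Definition inD {m} (rho : R) (x : vec m) : Prop := vnorm x <= rho.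

(* DP is a family of derivatives (DP k x = D^k P(x), a k-linear map) of a
   C^r map P on D: DP 0 = P, DP (k+1) is the Frechet derivative (relative
   to D) of x |-> DP k x in the multilinear operator norm, and DP r is
   continuous on D. *)
Definition Cr_family {m d} (rho : R) (r : nat) (P : vec m -> vec d)
  (DP : nat -> vec m -> mlmap m d) : Prop :=
  (forall x, inD rho x -> forall xi, DP 0%nat x xi = P x) /\
  (forall k x, (k <= r)%nat -> inD rho x -> is_multilinear k (DP k x)) /\
  (forall k x, (k < r)%nat -> inD rho x -> forall eps, 0 < eps ->
     exists delta, 0 < delta /\ forall y, inD rho y -> vnorm (vsub y x) < delta ->
       forall xi : nat -> vec m, (forall i, (i < k)%nat -> vnorm (xi i) <= 1) ->
         vnorm (vsub (vsub (DP k y xi) (DP k x xi)) (DP k.+1 x (scons (vsub y x) xi)))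
           <= eps * vnorm (vsub y x)) /\
  (forall x, inD rho x -> forall eps, 0 < eps ->
     exists delta, 0 < delta /\ forall y, inD rho y -> vnorm (vsub y x) < delta ->
       forall xi : nat -> vec m, (forall i, (i < r)%nat -> vnorm (xi i) <= 1) ->
         vnorm (vsub (DP r y xi) (DP r x xi)) <= eps).

Definition is_Cr {m d} (rho : R) (r : nat) (P : vec m -> vec d) : Prop :=
  exists DP, Cr_family rho r P DP.

Definition inH {m d} (rho : R) (r : nat) (P : vec m -> vec d) : Prop :=
  exists DP, Cr_family rho r P DP /\
    forall i, (i < r)%nat -> forall xi, DP i vzero xi = vzero.

Definition derivs {m d} (rho : R) (r : nat) (P : vec m -> vec d)
  : nat -> vec m -> mlmap m d :=
  epsilon (inhabits (fun _ _ _ => vzero)) (fun DP => Cr_family rho r P DP).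

Definition Hnorm {m d} (rho : R) (r : nat) (P : vec m -> vec d) : R :=
  Rsup (fun t => exists x, inD rho x /\ t = mlnorm r (derivs rho r P r x)).

Definition Lop {m d} (N : nat) (B : nat -> mat d d) (Lam : mat m m)
  (phi : vec m -> vec d) : vec m -> vec d :=
  fun x l => \big[Rplus/0]_(j < N.+1) mv (B j) (phi (mv (mpow Lam j) x)) l.

(* Formally L = B_0 (I + sum_{j>=1} A_j T^j) with A_j = B_0^{-1} B_j and
   T phi = phi o Lambda, so its inverse is the power series
     M P = sum_{s>=0} C_s (P o Lambda^s),
   where the matrices C_s are the coefficients of the inverse of the matrix
   polynomial sum_j B_j z^j: C_0 = B_0^{-1} and
   C_{n+1} = - sum_{1<=j<=N, j<=n+1} A_j C_{n+1-j}.
   A renewal inequality shows that a_s = ||C_s|| mu^s is summable as soon as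
   q = sum_j ||A_j|| mu^j < 1.  A map P in H_r is flat of order r at 0, so by
   Taylor's inequality ||D^k P(z)|| <= H ||z||^(r-k) with H = sup ||D^r P||;
   since ||Lambda^s||^r <= mu^s, the k-th derivatives of the terms of M P are
   bounded by a constant times a_s.  Hence the series M P, and its term-wise
   derivatives, converge uniformly and M P is again in H_r with
   ||M P||'_r <= (rho+1)^r (sum a_s) ||P||'_r.  The identity L M = id is a
   Cauchy-product computation with the C_s; M L = id follows from injectivity
   of L on H_r: a flat F with L F = 0 satisfies F = - sum_j A_j F o Lambda^j,
   whence ||F(z)|| <= q^n H ||z||^r for every n. *)

From mathcomp Require Import ssreflect ssrfun ssrbool eqtype ssrnat seq fintype bigop.
From Stdlib Require Import Reals ClassicalEpsilon.
From HB Require Import structures.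
From Stdlib Require Import FunctionalExtensionality Lra Lia Classical.
From Coquelicot Require Import Coquelicot.
Open Scope R_scope.

Set Implicit Arguments. Unset Strict Implicit.

(* (R, +, 0) is a commutative monoid over which * distributes: this lets the
   generic bigop lemmas (big_split, big_distrr, exchange_big, ...) act on
   \big[Rplus/0]. *)
Lemma Rplus_0_l' : left_id 0 Rplus. Proof. move=> x; ring. Qed.
Lemma Rplus_assoc' : associative Rplus. Proof. move=> x y z; ring. Qed.
Lemma Rplus_comm' : commutative Rplus. Proof. move=> x y; ring. Qed.
Lemma Rmult_0_l' : left_zero 0 Rmult. Proof. move=> x; ring. Qed.
Lemma Rmult_0_r' : right_zero 0 Rmult. Proof. move=> x; ring. Qed.
Lemma Rmult_plus_distr_l' : left_distributive Rmult Rplus. Proof. move=> x y z; ring. Qed.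
Lemma Rmult_plus_distr_r' : right_distributive Rmult Rplus. Proof. move=> x y z; ring. Qed.
HB.instance Definition _ := Monoid.isComLaw.Build R 0 Rplus Rplus_assoc' Rplus_comm' Rplus_0_l'.
HB.instance Definition _ := Monoid.isMulLaw.Build R 0 Rmult Rmult_0_l' Rmult_0_r'.
HB.instance Definition _ :=
  Monoid.isAddLaw.Build R Rmult Rplus Rmult_plus_distr_l' Rmult_plus_distr_r'.

(** * Finite sums and maxima of reals *)

Lemma big_Rmax_ge_seq (T : eqType) (s : seq T) (F : T -> R) j :
  j \in s -> F j <= \big[Rmax/0]_(i <- s) F i.
Proof.
elim: s => [|a s IH] //=; rewrite in_cons big_cons => /orP [/eqP ->|H].
- apply Rmax_l.
- apply: Rle_trans (IH H) _; apply Rmax_r.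
Qed.

Lemma big_Rmax_ge n (F : 'I_n -> R) j : F j <= \big[Rmax/0]_(i < n) F i.
Proof. by apply: big_Rmax_ge_seq; rewrite mem_index_enum. Qed.

(* Upper bounds for iterated maxima (the empty maximum being 0). *)
Lemma big_Rmax_le n (F : 'I_n -> R) c : 0 <= c -> (forall i, F i <= c) ->
  \big[Rmax/0]_(i < n) F i <= c.
Proof. move=> c0 H; apply: (big_ind (fun x => x <= c)) => // x y; apply Rmax_lub. Qed.

Lemma big_Rmax_lt n (F : 'I_n -> R) c : 0 < c -> (forall i, F i < c) ->
  \big[Rmax/0]_(i < n) F i < c.
Proof. move=> c0 H; apply: (big_ind (fun x => x < c)) => // x y; apply Rmax_lub_lt. Qed.

Lemma big_Rmax_ge0 n (F : 'I_n -> R) : 0 <= \big[Rmax/0]_(i < n) F i.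
Proof.
apply: (big_rec (fun x => 0 <= x)); first lra.
move=> i x _ Hx; apply: Rle_trans Hx _; apply Rmax_r.
Qed.

Lemma sumR_le (I : Type) (s : seq I) (P : pred I) (F G : I -> R) :
  (forall i, P i -> F i <= G i) ->
  \big[Rplus/0]_(i <- s | P i) F i <= \big[Rplus/0]_(i <- s | P i) G i.
Proof.
move=> H; apply: (big_ind2 (fun x y => x <= y)) => //; first lra.
move=> ? ? ? ? ? ?; lra.
Qed.

Lemma sumR_ge0 (I : Type) (s : seq I) (P : pred I) (F : I -> R) :
  (forall i, P i -> 0 <= F i) -> 0 <= \big[Rplus/0]_(i <- s | P i) F i.
Proof.
move=> H; apply: (big_ind (fun x => 0 <= x)) => //; first lra.
move=> ? ? ? ?; lra.
Qed.

Lemma sumR_abs (I : Type) (s : seq I) (P : pred I) (F : I -> R) :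
  Rabs (\big[Rplus/0]_(i <- s | P i) F i) <= \big[Rplus/0]_(i <- s | P i) Rabs (F i).
Proof.
apply: (big_ind2 (fun x y => Rabs x <= y)).
- rewrite Rabs_R0; lra.
- move=> x1 x2 y1 y2 H1 H2; apply: Rle_trans (Rabs_triang _ _) _; lra.
- move=> i _; lra.
Qed.

Lemma sumR_ge_term n (F : 'I_n -> R) j : (forall i, 0 <= F i) ->
  F j <= \big[Rplus/0]_(i < n) F i.
Proof.
move=> H; rewrite (bigD1 j) //=.
match goal with |- _ <= _ + ?S => have : 0 <= S by apply sumR_ge0 end.
lra.
Qed.

Lemma sumR_opp (I : Type) (s : seq I) (P : pred I) (F : I -> R) :
  \big[Rplus/0]_(i <- s | P i) (- F i) = - \big[Rplus/0]_(i <- s | P i) F i.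
Proof.
apply: (big_ind2 (fun x y => x = - y)); first lra.
- move=> ? ? ? ? -> ->; lra.
- by [].
Qed.

Lemma sum_const n c : \big[Rplus/0]_(j < n) c = INR n * c.
Proof.
elim: n => [|n IH]; first by rewrite big_ord0 /=; ring.
rewrite big_ord_recr IH S_INR /=; ring.
Qed.

(* Peeling off the last or the first term of a sum over 'I_n.+1, stated for
   functions on nat so that the remaining sum is again over a plain index. *)
Lemma sum_recr (a : nat -> R) n :
  \big[Rplus/0]_(i < n.+1) a i = \big[Rplus/0]_(i < n) a i + a n.
Proof. by rewrite big_ord_recr. Qed.

Lemma sum_recl (a : nat -> R) n :
  \big[Rplus/0]_(i < n.+1) a i = a 0%nat + \big[Rplus/0]_(i < n) a i.+1.
Proof. by rewrite big_ord_recl. Qed.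

Lemma sumR_prefix_le (a : nat -> R) p n : (forall i, 0 <= a i) -> (p <= n)%nat ->
  \big[Rplus/0]_(i < p) a i <= \big[Rplus/0]_(i < n) a i.
Proof.
move=> Ha; elim: n => [|n IH] Hpn.
- have -> : p = 0%nat by apply/eqP; rewrite -leqn0.
  lra.
- rewrite sum_recr; case: (ltngtP p n.+1) => Hp.
  + have := IH Hp; have := Ha n; lra.
  + by move: (leq_trans Hp Hpn); rewrite ltnn.
  + subst p; rewrite sum_recr; lra.
Qed.

(** * The sup norm on R^n *)

Lemma vnorm_ge0 n (x : vec n) : 0 <= vnorm x.
Proof. apply big_Rmax_ge0. Qed.

Lemma vnorm_coord n (x : vec n) i : Rabs (x i) <= vnorm x.
Proof. apply: (big_Rmax_ge (fun i => Rabs (x i))). Qed.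

Lemma vnorm_le n (x : vec n) c : 0 <= c -> (forall i, Rabs (x i) <= c) -> vnorm x <= c.
Proof. exact: big_Rmax_le. Qed.

Lemma vnorm_lt n (x : vec n) c : 0 < c -> (forall i, Rabs (x i) < c) -> vnorm x < c.
Proof. exact: big_Rmax_lt. Qed.

Lemma vnorm_zero n : vnorm (@vzero n) = 0.
Proof.
apply Rle_antisym; last apply vnorm_ge0.
apply vnorm_le => [|i]; rewrite /vzero ?Rabs_R0; lra.
Qed.

Lemma vnorm_eq0 n (x : vec n) : vnorm x = 0 -> x = vzero.
Proof.
move=> H; apply functional_extensionality => i.
have := vnorm_coord x i; rewrite H /vzero => Hi.
have := Rabs_pos (x i); move=> Hp.
case: (Req_dec (x i) 0) => // Hne; have := Rabs_no_R0 _ Hne; lra.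
Qed.

Lemma vnorm_add n (x y : vec n) : vnorm (vadd x y) <= vnorm x + vnorm y.
Proof.
apply vnorm_le => [|i]; first by have := vnorm_ge0 x; have := vnorm_ge0 y; lra.
rewrite /vadd; apply: Rle_trans (Rabs_triang _ _) _.
have := vnorm_coord x i; have := vnorm_coord y i; lra.
Qed.

Lemma vnorm_sub n (x y : vec n) : vnorm (vsub x y) <= vnorm x + vnorm y.
Proof.
apply vnorm_le => [|i]; first by have := vnorm_ge0 x; have := vnorm_ge0 y; lra.
rewrite /vsub; apply: Rle_trans (Rabs_triang _ _) _; rewrite Rabs_Ropp.
have := vnorm_coord x i; have := vnorm_coord y i; lra.
Qed.

Lemma vnorm_scale_le n a (x : vec n) : vnorm (vscale a x) <= Rabs a * vnorm x.
Proof.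
apply vnorm_le => [|i]; first by apply Rmult_le_pos; [apply Rabs_pos|apply vnorm_ge0].
rewrite /vscale Rabs_mult; apply Rmult_le_compat_l; [apply Rabs_pos|apply vnorm_coord].
Qed.

Lemma vnorm_scale n a (x : vec n) : vnorm (vscale a x) = Rabs a * vnorm x.
Proof.
apply Rle_antisym; first apply vnorm_scale_le.
case: (Req_dec a 0) => [->|Ha].
- rewrite Rabs_R0 Rmult_0_l; apply vnorm_ge0.
- have Hx : x = vscale (/ a) (vscale a x).
    by apply functional_extensionality => i; rewrite /vscale; field.
  have H := vnorm_scale_le (/ a) (vscale a x).
  rewrite -Hx Rabs_inv in H.
  have Hp : 0 < Rabs a by apply Rabs_pos_lt.
  have H2 : Rabs a * vnorm x <= Rabs a * (/ Rabs a * vnorm (vscale a x)).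
    apply Rmult_le_compat_l; lra.
  rewrite -Rmult_assoc Rinv_r in H2; lra.
Qed.

Lemma vnorm_normalize n (h : vec n) : vnorm h <> 0 ->
  vnorm (vscale (/ vnorm h) h) = 1 /\ h = vscale (vnorm h) (vscale (/ vnorm h) h).
Proof.
move=> H; have H0 := vnorm_ge0 h; split.
- rewrite vnorm_scale Rabs_inv Rabs_right; [field | lra]; done.
- apply functional_extensionality => i; rewrite /vscale; field; done.
Qed.

Lemma vnorm_bigsum n d (F : 'I_n -> vec d) :
  vnorm (fun l => \big[Rplus/0]_(j < n) F j l) <= \big[Rplus/0]_(j < n) vnorm (F j).
Proof.
apply vnorm_le; first by apply sumR_ge0 => j _; apply vnorm_ge0.
move=> l; apply: Rle_trans (sumR_abs _ _ _) _; apply sumR_le => j _; apply vnorm_coord.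
Qed.

Lemma sub_sum n d (F1 F2 : 'I_n -> vec d) :
  vsub (fun l => \big[Rplus/0]_(j < n) F1 j l) (fun l => \big[Rplus/0]_(j < n) F2 j l) =
  (fun l => \big[Rplus/0]_(j < n) vsub (F1 j) (F2 j) l).
Proof.
apply functional_extensionality => l; rewrite /vsub /Rminus.
rewrite -!sumR_opp -!big_split /=; apply eq_bigr => j _; ring.
Qed.

Lemma rem_sum n d (F1 F2 F3 : 'I_n -> vec d) :
  vsub (vsub (fun l => \big[Rplus/0]_(j < n) F1 j l) (fun l => \big[Rplus/0]_(j < n) F2 j l))
    (fun l => \big[Rplus/0]_(j < n) F3 j l) =
  (fun l => \big[Rplus/0]_(j < n) vsub (vsub (F1 j) (F2 j)) (F3 j) l).
Proof. by rewrite !sub_sum. Qed.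

(** * Matrices acting on vectors *)

Lemma mv_add n p (A : mat n p) x y : mv A (vadd x y) = vadd (mv A x) (mv A y).
Proof.
apply functional_extensionality => i; rewrite /mv /vadd -big_split /=.
apply eq_bigr => j _; ring.
Qed.

Lemma mv_scale n p (A : mat n p) a x : mv A (vscale a x) = vscale a (mv A x).
Proof.
apply functional_extensionality => i; rewrite /mv /vscale big_distrr /=.
apply eq_bigr => j _; ring.
Qed.

Lemma mv_zero n p (A : mat n p) : mv A vzero = vzero.
Proof. apply functional_extensionality => i; rewrite /mv /vzero big1 // => j _; ring. Qed.

Lemma mv_sub n p (A : mat n p) x y : mv A (vsub x y) = vsub (mv A x) (mv A y).
Proof.
apply functional_extensionality => i; rewrite /mv /vsub /Rminus -sumR_opp -big_split /=.
apply eq_bigr => j _; ring.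
Qed.

Lemma mv_lin n p (A : mat n p) a b x y :
  mv A (vadd (vscale a x) (vscale b y)) = vadd (vscale a (mv A x)) (vscale b (mv A y)).
Proof. by rewrite mv_add !mv_scale. Qed.

Lemma mv_mmul n p q (A : mat n p) (C : mat p q) x : mv (mmul A C) x = mv A (mv C x).
Proof.
apply functional_extensionality => i; rewrite /mv /mmul.
under eq_bigr => k _ do rewrite big_distrl /=.
rewrite exchange_big /=; apply eq_bigr => j _.
rewrite big_distrr /=; apply eq_bigr => k _; ring.
Qed.

Lemma mv_mid n (x : vec n) : mv mid x = x.
Proof.
apply functional_extensionality => i; rewrite /mv /mid (bigD1 i) //= eqxx.
rewrite big1; first ring.
move=> j /negbTE; rewrite eq_sym => ->; ring.
Qed.

Lemma mv_bigsum n p N (A : mat n p) (F : 'I_N -> vec p) :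
  mv A (fun i => \big[Rplus/0]_(j < N) F j i) = (fun i => \big[Rplus/0]_(j < N) mv A (F j) i).
Proof.
apply functional_extensionality => i; rewrite /mv.
under eq_bigr => k _ do rewrite big_distrr /=.
by rewrite exchange_big.
Qed.

Lemma mpow_add n (A : mat n n) a b x :
  mv (mpow A (a + b)) x = mv (mpow A a) (mv (mpow A b) x).
Proof. elim: a => [|a IH] /=; by rewrite ?mv_mid // !mv_mmul IH. Qed.

(* sum of the absolute values of the entries: a crude bound for the action
   of a matrix, which shows that the operator norm is finite. *)
Definition mtot {n p} (A : mat n p) : R :=
  \big[Rplus/0]_(i < n) \big[Rplus/0]_(j < p) Rabs (A i j).

Lemma mtot_ge0 n p (A : mat n p) : 0 <= mtot A.
Proof. apply sumR_ge0 => i _; apply sumR_ge0 => j _; apply Rabs_pos. Qed.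

Lemma mv_bound_tot n p (A : mat n p) x : vnorm (mv A x) <= mtot A * vnorm x.
Proof.
apply vnorm_le => [|i]; first by apply Rmult_le_pos; [apply mtot_ge0|apply vnorm_ge0].
rewrite /mv; apply: Rle_trans (sumR_abs _ _ _) _.
apply: (Rle_trans _ ((\big[Rplus/0]_(j < p) Rabs (A i j)) * vnorm x)).
- rewrite big_distrl /=; apply sumR_le => j _; rewrite Rabs_mult.
  apply Rmult_le_compat_l; [apply Rabs_pos|apply vnorm_coord].
- apply Rmult_le_compat_r; first apply vnorm_ge0.
  apply: (@sumR_ge_term n (fun i => \big[Rplus/0]_(j < p) Rabs (A i j))) => k.
  apply sumR_ge0 => j _; apply Rabs_pos.
Qed.

(** * Suprema and the operator norm *)

Lemma Rsup_lub (E : R -> Prop) M t0 : (forall t, E t -> t <= M) -> E t0 -> is_lub E (Rsup E).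
Proof.
move=> HM H0; rewrite /Rsup; apply epsilon_spec.
have [s Hs] := completeness E (ex_intro _ M HM) (ex_intro _ t0 H0).
by exists s.
Qed.

Lemma opnorm_lub n p (A : mat n p) :
  is_lub (fun t => t = 0 \/ exists x : vec p, vnorm x = 1 /\ t = vnorm (mv A x)) (opnorm A).
Proof.
apply: (Rsup_lub (M := mtot A) (t0 := 0)); last by left.
move=> t [->|[x [H1 ->]]]; first apply mtot_ge0.
apply: Rle_trans (mv_bound_tot A x) _; rewrite H1; lra.
Qed.

Lemma opnorm_ge0 n p (A : mat n p) : 0 <= opnorm A.
Proof. case: (opnorm_lub A) => H _; apply H; by left. Qed.

Lemma mv_opnorm n p (A : mat n p) x : vnorm (mv A x) <= opnorm A * vnorm x.
Proof.
case: (Req_dec (vnorm x) 0) => Hx.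
- rewrite (vnorm_eq0 Hx) mv_zero !vnorm_zero Rmult_0_r; lra.
- have [H1 H2] := vnorm_normalize Hx.
  set y := vscale (/ vnorm x) x in H1 H2.
  have -> : mv A x = vscale (vnorm x) (mv A y) by rewrite {1}H2 mv_scale.
  rewrite vnorm_scale Rabs_right; last by have := vnorm_ge0 x; lra.
  rewrite Rmult_comm; apply Rmult_le_compat_r; first apply vnorm_ge0.
  case: (opnorm_lub A) => H _; apply H; right; eexists; split; [exact H1|done].
Qed.

Lemma opnorm_le n p (A : mat n p) K : 0 <= K ->
  (forall x, vnorm (mv A x) <= K * vnorm x) -> opnorm A <= K.
Proof.
move=> K0 H; case: (opnorm_lub A) => _ H2; apply H2.
move=> t [->|[x [H1 ->]]] //; have := H x; rewrite H1; lra.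
Qed.

Lemma mv_small n p (G : mat n p) (w : vec p) eps c : 0 < eps -> 0 <= c ->
  vnorm w <= eps / (opnorm G + 1) * c -> vnorm (mv G w) <= eps * c.
Proof.
move=> He c0 Hw; have Gp := opnorm_ge0 G.
apply: Rle_trans (mv_opnorm _ _) _.
have -> : eps * c = opnorm G * (eps / (opnorm G + 1) * c) + eps / (opnorm G + 1) * c.
  field; lra.
have : 0 <= eps / (opnorm G + 1) * c by apply Rmult_le_pos => //; apply Rlt_le, Rdiv_lt_0_compat; lra.
have : opnorm G * vnorm w <= opnorm G * (eps / (opnorm G + 1) * c) by apply Rmult_le_compat_l.
lra.
Qed.

(** * Multilinear maps *)

Section Multilinear.
Variables (m d : nat).
Implicit Types (T : mlmap m d) (xi : nat -> vec m).

Lemma ml_ext k T xi xi' :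
  is_multilinear k T -> (forall i, (i < k)%nat -> xi i = xi' i) -> T xi = T xi'.
Proof. by case=> H _; apply H. Qed.

Lemma vadd_scale0 n (u v : vec n) a : vadd (vscale a u) (vscale 0 v) = vscale a u.
Proof. apply functional_extensionality => i; rewrite /vadd /vscale; ring. Qed.

Lemma vscale0 n (x : vec n) : vscale 0 x = vzero.
Proof. apply functional_extensionality => j; rewrite /vscale /vzero; ring. Qed.

Lemma vzero_scale0 n : (@vzero n) = vscale 0 vzero.
Proof. by rewrite vscale0. Qed.

Lemma ml_upd_scale k T xi i a u : is_multilinear k T -> (i < k)%nat ->
  T (upd xi i (vscale a u)) = vscale a (T (upd xi i u)).
Proof. by case=> _ H Hi; have := H xi i a 0 u u Hi; rewrite !vadd_scale0. Qed.

Lemma ml_upd_zero k T xi i : is_multilinear k T -> (i < k)%nat -> T (upd xi i vzero) = vzero.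
Proof. by move=> HT Hi; rewrite vzero_scale0 (ml_upd_scale _ _ _ HT Hi) vscale0. Qed.

Lemma upd_scons0 xi h u : upd (scons h xi) 0 u = scons u xi.
Proof. apply functional_extensionality => j; by case: j. Qed.

Lemma upd_same xi i : upd xi i (xi i) = xi.
Proof.
apply functional_extensionality => j; rewrite /upd.
case E: (Nat.eqb j i) => //; by move/Nat.eqb_eq: E => ->.
Qed.

Lemma shift_scons xi : scons (xi 0%nat) (fun i => xi i.+1) = xi.
Proof. apply functional_extensionality => i; by case: i. Qed.

Lemma slot0_lin k T xi a b u v : is_multilinear k.+1 T ->
  T (scons (vadd (vscale a u) (vscale b v)) xi) =
  vadd (vscale a (T (scons u xi))) (vscale b (T (scons v xi))).
Proof. by case=> _ H; have := H (scons u xi) 0%nat a b u v (ltn0Sn k); rewrite !upd_scons0. Qed.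

Lemma slot0_scale k T xi a u : is_multilinear k.+1 T ->
  T (scons (vscale a u) xi) = vscale a (T (scons u xi)).
Proof. by move=> HT; have := slot0_lin xi a 0 u u HT; rewrite !vadd_scale0. Qed.

Lemma slot0_zero k T xi : is_multilinear k.+1 T -> T (scons vzero xi) = vzero.
Proof. by move=> HT; rewrite vzero_scale0 (slot0_scale _ _ _ HT) vscale0. Qed.

Lemma slot0_sub k T xi u v : is_multilinear k.+1 T ->
  T (scons (vsub u v) xi) = vsub (T (scons u xi)) (T (scons v xi)).
Proof.
move=> HT; have -> : vsub u v = vadd (vscale 1 u) (vscale (-1) v).
  apply functional_extensionality => j; rewrite /vsub /vadd /vscale; ring.
rewrite (slot0_lin _ _ _ _ _ HT).
apply functional_extensionality => j; rewrite /vsub /vadd /vscale; ring.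
Qed.

Lemma slot0_add k T xi u v : is_multilinear k.+1 T ->
  T (scons (vadd u v) xi) = vadd (T (scons u xi)) (T (scons v xi)).
Proof.
move=> HT; have -> : vadd u v = vadd (vscale 1 u) (vscale 1 v).
  apply functional_extensionality => j; rewrite /vadd /vscale; ring.
rewrite (slot0_lin _ _ _ _ _ HT).
apply functional_extensionality => j; rewrite /vadd /vscale; ring.
Qed.

Lemma ml_shift k T h : is_multilinear k.+1 T -> is_multilinear k (fun eta => T (scons h eta)).
Proof.
move=> HT; split.
- move=> xi xi' H; apply (ml_ext HT) => i; case: i => //= i Hi; exact: H.
- move=> xi i a b u v Hi.
  have E : forall w, scons h (upd xi i w) = upd (scons h xi) i.+1 w.
    by move=> w; apply functional_extensionality => j; case: j.
  rewrite !E; case: HT => _ H; exact: H.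
Qed.

Definition UB k T K :=
  forall xi, (forall i, (i < k)%nat -> vnorm (xi i) <= 1) -> vnorm (T xi) <= K.

Definition sclv (j : nat) (c : R) xi : nat -> vec m :=
  fun i => if (i < j)%nat then vscale c (xi i) else xi i.

Lemma sclv_scale k T c xi j : is_multilinear k T -> (j <= k)%nat ->
  T (sclv j c xi) = vscale (c ^ j) (T xi).
Proof.
move=> HT; elim: j => [|j IH] Hj.
- have -> : sclv 0 c xi = xi by apply functional_extensionality => i.
  apply functional_extensionality => i; rewrite /vscale /=; ring.
- have E : sclv j.+1 c xi = upd (sclv j c xi) j (vscale c (xi j)).
    apply functional_extensionality => i; rewrite /sclv /upd.
    case E: (Nat.eqb i j).
    + move/Nat.eqb_eq: E => ->; by rewrite ?ltnSn ?ltnn.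
    + move/Nat.eqb_neq: E => E.
      by rewrite ltnS leq_eqVlt; have -> : (i == j) = false by apply/eqP.
  rewrite E (ml_upd_scale _ _ _ HT Hj).
  have -> : upd (sclv j c xi) j (xi j) = sclv j c xi.
    apply functional_extensionality => i; rewrite /sclv /upd.
    case E2: (Nat.eqb i j) => //; move/Nat.eqb_eq: E2 => ->; by rewrite ?ltnn.
  rewrite IH; last exact: ltnW.
  apply functional_extensionality => i; rewrite /vscale /=; ring.
Qed.

Lemma UB_scale k T K c xi : is_multilinear k T -> UB k T K -> 0 <= c ->
  (forall i, (i < k)%nat -> vnorm (xi i) <= c) -> vnorm (T xi) <= c ^ k * K.
Proof.
move=> HT HK c0 Hxi.
case: (Req_dec c 0) => [Ec|Ec].
- subst c; case: k HT HK Hxi => [|k] HT HK Hxi.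
  + rewrite /= Rmult_1_l; exact: HK.
  + have E : T xi = T (sclv k.+1 0 xi).
      apply (ml_ext HT) => i Hi; rewrite /sclv Hi.
      have := Hxi i Hi; have := vnorm_ge0 (xi i) => H1 H2.
      rewrite (vnorm_eq0 (Rle_antisym _ _ H2 H1)); exact: vzero_scale0.
    rewrite E (sclv_scale _ _ HT (leqnn _)) vnorm_scale pow_i; last lia.
    rewrite Rabs_R0 !Rmult_0_l; lra.
- have cp : 0 < c by lra.
  have E : T xi = T (sclv k c (sclv k (/ c) xi)).
    apply (ml_ext HT) => i Hi; rewrite /sclv Hi.
    apply functional_extensionality => j; rewrite /vscale; field; lra.
  rewrite E (sclv_scale _ _ HT (leqnn _)) vnorm_scale Rabs_right; last first.
    apply Rle_ge, pow_le; lra.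
  apply Rmult_le_compat_l; first by apply pow_le; lra.
  apply HK => i Hi; rewrite /sclv Hi vnorm_scale Rabs_right; last first.
    by apply Rle_ge, Rlt_le, Rinv_0_lt_compat.
  have := Hxi i Hi => H.
  apply (Rmult_le_reg_l c) => //; rewrite -Rmult_assoc Rinv_r; lra.
Qed.

Lemma UB_slot0 k T K xi h : is_multilinear k.+1 T -> UB k.+1 T K ->
  (forall i, (i < k)%nat -> vnorm (xi i) <= 1) -> vnorm (T (scons h xi)) <= vnorm h * K.
Proof.
move=> HT HK Hxi.
case: (Req_dec (vnorm h) 0) => Eh.
- rewrite (vnorm_eq0 Eh) (slot0_zero _ HT) !vnorm_zero; lra.
- have [H1 H2] := vnorm_normalize Eh.
  set u := vscale (/ vnorm h) h in H1 H2.
  rewrite H2 (slot0_scale _ _ _ HT) vnorm_scale Rabs_right; last by have := vnorm_ge0 h; lra.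
  rewrite -H2; apply Rmult_le_compat_l; first apply vnorm_ge0.
  apply HK => i; case: i => [|i] Hi //=; [lra | exact: Hxi].
Qed.

Definition ebasis (j : 'I_m) : vec m := fun l => if l == j then 1 else 0.

Lemma fin_choice (Q : 'I_m -> R -> Prop) :
  (forall j K K', Q j K -> K <= K' -> Q j K') ->
  (forall j, exists K, Q j K) -> exists K, 0 <= K /\ forall j, Q j K.
Proof.
move=> Hmono H.
set Kf := fun j => epsilon (inhabits 0) (Q j).
exists (\big[Rmax/0]_(j < m) Kf j); split; first exact: big_Rmax_ge0.
move=> j; apply: (Hmono j (Kf j)); first exact: epsilon_spec.
exact: (big_Rmax_ge Kf j).
Qed.

(* Writing the first argument in the standard basis: a bound K on every
   T (e_j, .) gives the bound m K on T. *)
Lemma UB_slot0_basis k T K : is_multilinear k.+1 T -> 0 <= K ->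
  (forall j, UB k (fun eta => T (scons (ebasis j) eta)) K) -> UB k.+1 T (INR m * K).
Proof.
move=> HT K0 HK xi Hxi.
set h := xi 0%nat; set eta := fun i => xi i.+1.
rewrite -(shift_scons xi) -/h -/eta.
have Heta : forall i, (i < k)%nat -> vnorm (eta i) <= 1 by move=> i Hi; exact: Hxi.
have Hh : vnorm h <= 1 by apply Hxi.
set pv := fun n (l : 'I_m) => if (l < n)%nat then h l else 0.
have Hpv : forall n, (n <= m)%nat -> vnorm (T (scons (pv n) eta)) <= INR n * K.
  elim => [|n IHn] Hn.
  - have -> : pv 0%nat = vzero by apply functional_extensionality => l.
    rewrite (slot0_zero _ HT) vnorm_zero /=; lra.
  - set o : 'I_m := Ordinal Hn.
    have -> : pv n.+1 = vadd (pv n) (vscale (h o) (ebasis o)).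
      apply functional_extensionality => l; rewrite /pv /vadd /vscale /ebasis.
      case: (eqVneq l o) => [->|Hlo]; first by rewrite /= ltnSn ltnn; ring.
      have Hl : nat_of_ord l <> n by move=> E; move/eqP: Hlo; apply; exact: ord_inj.
      rewrite ltnS leq_eqVlt; have -> : (nat_of_ord l == n) = false by apply/eqP.
      rewrite /=; ring.
    rewrite (slot0_add _ _ _ HT) (slot0_scale _ _ _ HT).
    apply: Rle_trans (vnorm_add _ _) _; rewrite vnorm_scale S_INR.
    have H1 : Rabs (h o) <= 1 by apply: Rle_trans (vnorm_coord _ _) Hh.
    have : Rabs (h o) * vnorm (T (scons (ebasis o) eta)) <= 1 * K.
      apply Rmult_le_compat; [apply Rabs_pos|apply vnorm_ge0|done|exact: HK].
    have := IHn (ltnW Hn); lra.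
have -> : h = pv m by apply functional_extensionality => l; rewrite /pv ltn_ord.
exact: Hpv.
Qed.

Lemma ml_bounded k T : is_multilinear k T -> exists K, 0 <= K /\ UB k T K.
Proof.
elim: k T => [|k IH] T HT.
- exists (vnorm (T (fun _ => vzero))); split; first apply vnorm_ge0.
  move=> xi _; rewrite (ml_ext (xi' := fun _ => vzero) HT) //; lra.
- have [K [K0 HK]] : exists K, 0 <= K /\
      forall j, UB k (fun eta => T (scons (ebasis j) eta)) K.
    apply fin_choice.
    + move=> j K K' H1 HKK' xi Hxi; have := H1 xi Hxi; lra.
    + move=> j; have [K [_ HK]] := IH _ (ml_shift (ebasis j) HT); by exists K.
  exists (INR m * K); split; first by apply Rmult_le_pos; [apply pos_INR|].
  exact: UB_slot0_basis.
Qed.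

Lemma mlnorm_lub k T : is_multilinear k T ->
  is_lub (fun t => t = 0 \/ exists xi : nat -> vec m,
            (forall i, (i < k)%nat -> vnorm (xi i) = 1) /\ t = vnorm (T xi))
         (mlnorm k T).
Proof.
move=> HT; have [K [K0 HK]] := ml_bounded HT.
apply: (Rsup_lub (M := K) (t0 := 0)); last by left.
move=> t [->|[xi [H1 ->]]] //; apply HK => i Hi; rewrite H1 //; lra.
Qed.

Lemma mlnorm_ge0 k T : is_multilinear k T -> 0 <= mlnorm k T.
Proof. move=> HT; case: (mlnorm_lub HT) => H _; apply H; by left. Qed.

(* ||T|| is attained as a bound on the product of closed unit balls: the
   arguments of norm < 1 are rescaled one at a time to unit vectors. *)
Lemma mlnorm_ub k T xi : is_multilinear k T ->
  (forall i, (i < k)%nat -> vnorm (xi i) <= 1) -> vnorm (T xi) <= mlnorm k T.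
Proof.
move=> HT.
suff H : forall j, (j <= k)%nat -> forall xi,
    (forall i, (i < j)%nat -> vnorm (xi i) <= 1) ->
    (forall i, (j <= i)%nat -> (i < k)%nat -> vnorm (xi i) = 1) -> vnorm (T xi) <= mlnorm k T.
  move=> Hxi; apply (H k (leqnn k)) => // i H1 H2.
  by have := leq_trans H2 H1; rewrite ltnn.
elim => [|j IH] Hj xi0 H1 H2.
- case: (mlnorm_lub HT) => Hub _; apply Hub; right; exists xi0; split => //.
  move=> i Hi; exact: H2.
- have Hjk : (j < k)%nat by [].
  case: (Req_dec (vnorm (xi0 j)) 0) => E.
  + rewrite -(upd_same xi0 j) (vnorm_eq0 E) (ml_upd_zero xi0 HT Hjk) vnorm_zero.
    exact: mlnorm_ge0.
  + have [N1 N2] := vnorm_normalize E.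
    set u := vscale (/ vnorm (xi0 j)) (xi0 j) in N1 N2.
    rewrite -(upd_same xi0 j) N2 (ml_upd_scale _ _ _ HT Hjk) vnorm_scale.
    have Hle : vnorm (xi0 j) <= 1 by apply H1.
    have Hg := vnorm_ge0 (xi0 j).
    rewrite Rabs_right; last lra.
    have Hu : vnorm (T (upd xi0 j u)) <= mlnorm k T.
      apply IH; first exact: ltnW.
      * move=> i Hi; rewrite /upd.
        case E2: (Nat.eqb i j); first by rewrite N1; lra.
        apply H1; exact: ltnW.
      * move=> i Hi Hik; rewrite /upd.
        case E2: (Nat.eqb i j) => //.
        move/Nat.eqb_neq: E2 => E2; apply H2 => //.
        rewrite ltn_neqAle Hi andbT; apply/eqP => E3; exact: E2.
    have := mlnorm_ge0 HT; have := vnorm_ge0 (T (upd xi0 j u)) => A1 A2.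
    have : vnorm (xi0 j) * vnorm (T (upd xi0 j u)) <= 1 * mlnorm k T.
      apply Rmult_le_compat; lra.
    lra.
Qed.

Lemma mlnorm_le k T K : is_multilinear k T -> 0 <= K -> UB k T K -> mlnorm k T <= K.
Proof.
move=> HT K0 HK; case: (mlnorm_lub HT) => _ H; apply H.
move=> t [->|[xi [H1 ->]]] //; apply HK => i Hi; rewrite H1 //; lra.
Qed.

End Multilinear.

(** * Segments in the box D *)

Section Segments.
Variable m : nat.

Definition seg (x z : vec m) (t : R) : vec m := fun i => x i + t * (z i - x i).

Lemma inD_seg rho x z t : inD rho x -> inD rho z -> 0 <= t <= 1 -> inD rho (seg x z t).
Proof.
rewrite /inD => Hx Hz Ht.
have r0 : 0 <= rho by have := vnorm_ge0 x; lra.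
apply vnorm_le => // i; rewrite /seg.
have -> : x i + t * (z i - x i) = (1 - t) * x i + t * z i by ring.
apply: Rle_trans (Rabs_triang _ _) _; rewrite !Rabs_mult.
rewrite (Rabs_right (1 - t)); last lra. rewrite (Rabs_right t); last lra.
have := vnorm_coord x i; have := vnorm_coord z i => A1 A2.
have : (1 - t) * Rabs (x i) <= (1 - t) * rho by apply Rmult_le_compat_l; lra.
have : t * Rabs (z i) <= t * rho by apply Rmult_le_compat_l; lra.
lra.
Qed.

Lemma seg_sub (x z : vec m) t : vsub (seg x z t) x = vscale t (vsub z x).
Proof. apply functional_extensionality => i; rewrite /seg /vsub /vscale; ring. Qed.

Lemma seg_sub2 (v u : vec m) s t : vsub (seg v u s) (seg v u t) = vscale (s - t) (vsub u v).
Proof. apply functional_extensionality => i; rewrite /seg /vsub /vscale; ring. Qed.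

Lemma seg0 (v u : vec m) : seg v u 0 = v.
Proof. apply functional_extensionality => i; rewrite /seg; ring. Qed.

Lemma seg1 (v u : vec m) : seg v u 1 = u.
Proof. apply functional_extensionality => i; rewrite /seg; ring. Qed.

Lemma seg_zero (z : vec m) t : seg vzero z t = vscale t z.
Proof. apply functional_extensionality => i; rewrite /seg /vzero /vscale; ring. Qed.

Lemma mv_seg (A : mat m m) x y t : mv A (seg x y t) = seg (mv A x) (mv A y) t.
Proof.
have E : forall u v : vec m, seg u v t = vadd u (vscale t (vsub v u)).
  by move=> u v; apply functional_extensionality => i; rewrite /seg /vadd /vscale /vsub; ring.
by rewrite !E mv_add mv_scale mv_sub.
Qed.

Lemma exists_small_step (a dl : R) : 0 < a -> 0 < dl -> exists t, 0 < t <= 1 /\ t * a < dl.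
Proof.
move=> Ha Hdl; exists (Rmin 1 (dl / (2 * a))); split.
- split; [apply Rmin_pos; [lra | apply Rdiv_lt_0_compat; lra] | apply Rmin_l].
- have H := Rmin_r 1 (dl / (2 * a)).
  have : Rmin 1 (dl / (2 * a)) * a <= dl / (2 * a) * a by apply Rmult_le_compat_r; lra.
  have -> : dl / (2 * a) * a = dl / 2 by field; lra.
  lra.
Qed.

End Segments.

(** * Closure properties of C^r families *)

Lemma le_eps a c : 0 <= a -> 0 <= c -> (forall e, 0 < e -> a <= e * c) -> a = 0.
Proof.
move=> a0 c0 H; apply Rle_antisym => //; apply Rnot_lt_le => Ha.
have := H (a / (2 * (c + 1))) ltac:(apply Rdiv_lt_0_compat; lra).
have : a / (2 * (c + 1)) * c < a.
  apply (Rmult_lt_reg_r (2 * (c + 1))); first lra.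
  field_simplify; try lra; nra.
lra.
Qed.

Lemma fin_delta (n : nat) (Q : nat -> R -> Prop) :
  (forall j dl dl', Q j dl -> 0 < dl' <= dl -> Q j dl') ->
  (forall j, (j < n)%nat -> exists dl, 0 < dl /\ Q j dl) ->
  exists dl, 0 < dl /\ forall j, (j < n)%nat -> Q j dl.
Proof.
move=> Hm; elim: n => [|n IH] H.
- by exists 1; split; first lra.
- have [dl1 [H1 H2]] : exists dl, 0 < dl /\ forall j, (j < n)%nat -> Q j dl.
    apply IH => j Hj; apply H; exact: ltn_trans Hj _.
  have [dl2 [H3 H4]] := H n (ltnSn n).
  exists (Rmin dl1 dl2); split; first exact: Rmin_pos.
  move=> j; rewrite ltnS leq_eqVlt => /orP [/eqP ->|Hj].
  + apply: Hm H4 _; split; [exact: Rmin_pos | apply Rmin_r].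
  + apply: Hm (H2 j Hj) _; split; [exact: Rmin_pos | apply Rmin_l].
Qed.

Lemma vnorm_sum_small n d (F : 'I_n -> vec d) eps c : 0 < eps -> 0 <= c ->
  (forall j, vnorm (F j) <= eps / (INR n + 1) * c) ->
  vnorm (fun l => \big[Rplus/0]_(j < n) F j l) <= eps * c.
Proof.
move=> He c0 HF; have en : 0 < INR n + 1 by have := pos_INR n; lra.
apply: Rle_trans (vnorm_bigsum F) _.
eapply Rle_trans.
  apply: (@sumR_le _ _ _ _ (fun _ : 'I_n => eps / (INR n + 1) * c)) => j _; exact: HF.
rewrite sum_const -Rmult_assoc; apply Rmult_le_compat_r => //.
apply (Rmult_le_reg_r (INR n + 1)) => //; field_simplify; lra.
Qed.

Section Closure.
Variables (m d : nat) (rho : R) (r : nat).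

Lemma mapA_scons (A : mat m m) h (xi : nat -> vec m) :
  (fun i => mv A (scons h xi i)) = scons (mv A h) (fun i => mv A (xi i)).
Proof. apply functional_extensionality => i; by case: i. Qed.

Lemma mapA_upd (A : mat m m) (xi : nat -> vec m) i w :
  (fun j => mv A (upd xi i w j)) = upd (fun j => mv A (xi j)) i (mv A w).
Proof. apply functional_extensionality => j; rewrite /upd; by case: (Nat.eqb j i). Qed.

Lemma ml_mv k (T : mlmap m d) (G : mat d d) :
  is_multilinear k T -> is_multilinear k (fun xi => mv G (T xi)).
Proof.
move=> [E1 E2]; split.
- move=> xi xi' H; by rewrite (E1 _ _ H).
- move=> xi i a b u v Hi; by rewrite E2 // mv_lin.
Qed.

Lemma ml_map k (T : mlmap m d) (A : mat m m) :
  is_multilinear k T -> is_multilinear k (fun xi => T (fun i => mv A (xi i))).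
Proof.
move=> [E1 E2]; split.
- move=> xi xi' H; apply E1 => i Hi; by rewrite H.
- move=> xi i a b u v Hi; by rewrite !mapA_upd mv_lin E2.
Qed.

(* Chain rule for x |-> G P(A x) with A a linear contraction (so A maps D
   into D): the derivatives are G D^k P(A x)(A xi_1, ..., A xi_k). *)
Lemma Cr_comp (P : vec m -> vec d) DP (G : mat d d) (A : mat m m) :
  Cr_family rho r P DP -> (forall x, vnorm (mv A x) <= vnorm x) ->
  Cr_family rho r (fun x => mv G (P (mv A x)))
    (fun k x xi => mv G (DP k (mv A x) (fun i => mv A (xi i)))).
Proof.
move=> [C1 [C2 [C3 C4]]] HA.
have HD : forall x, inD rho x -> inD rho (mv A x).
  move=> x; rewrite /inD => H; exact: Rle_trans (HA x) H.
have HAxi : forall k (xi : nat -> vec m), (forall i, (i < k)%nat -> vnorm (xi i) <= 1) ->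
    forall i, (i < k)%nat -> vnorm (mv A (xi i)) <= 1.
  move=> k xi Hxi i Hi; apply: Rle_trans (HA _) _; exact: Hxi.
have HAyx : forall x y, vnorm (vsub (mv A y) (mv A x)) <= vnorm (vsub y x).
  by move=> x y; rewrite -mv_sub.
have Gp := opnorm_ge0 G.
split; [|split; [|split]].
- move=> x Hx xi; by rewrite C1 //; apply HD.
- move=> k x Hk Hx; exact: ml_mv (ml_map A (C2 k (mv A x) Hk (HD x Hx))).
- move=> k x Hk Hx eps Heps.
  have [dl [Hdl H]] := C3 k (mv A x) Hk (HD x Hx) (eps / (opnorm G + 1))
     ltac:(apply Rdiv_lt_0_compat; lra).
  exists dl; split => // y Hy Hyx xi Hxi.
  rewrite mapA_scons -!mv_sub (mv_sub A); apply: mv_small => //; first exact: vnorm_ge0.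
  apply: Rle_trans (H _ (HD y Hy) _ _ (HAxi _ _ Hxi)) _.
  + exact: Rle_lt_trans (HAyx x y) Hyx.
  + apply Rmult_le_compat_l; [apply Rlt_le, Rdiv_lt_0_compat; lra | exact: HAyx].
- move=> x Hx eps Heps.
  have [dl [Hdl H]] := C4 (mv A x) (HD x Hx) (eps / (opnorm G + 1))
     ltac:(apply Rdiv_lt_0_compat; lra).
  exists dl; split => // y Hy Hyx xi Hxi.
  rewrite -mv_sub -(Rmult_1_r eps); apply: mv_small => //; first lra.
  rewrite Rmult_1_r; apply: H (HD y Hy) _ _ (HAxi _ _ Hxi).
  exact: Rle_lt_trans (HAyx x y) Hyx.
Qed.

Lemma Cr_ext (P P' : vec m -> vec d) DP DP' :
  Cr_family rho r P DP -> (forall x, inD rho x -> P' x = P x) ->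
  (forall k x xi, inD rho x -> DP' k x xi = DP k x xi) -> Cr_family rho r P' DP'.
Proof.
move=> [C1 [C2 [C3 C4]]] HP HD.
split; [|split; [|split]].
- move=> x Hx xi; rewrite HD // HP //; exact: C1.
- move=> k x Hk Hx.
  have -> : DP' k x = DP k x by apply functional_extensionality => xi; apply HD.
  exact: C2.
- move=> k x Hk Hx eps Heps; have [dl [Hdl H]] := C3 k x Hk Hx eps Heps.
  exists dl; split => // y Hy Hyx xi Hxi; rewrite !HD //; exact: H.
- move=> x Hx eps Heps; have [dl [Hdl H]] := C4 x Hx eps Heps.
  exists dl; split => // y Hy Hyx xi Hxi; rewrite !HD //; exact: H.
Qed.

Lemma Cr_sum n (Ps : nat -> vec m -> vec d) DPs :
  (forall j, (j < n)%nat -> Cr_family rho r (Ps j) (DPs j)) ->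
  Cr_family rho r (fun x l => \big[Rplus/0]_(j < n) Ps j x l)
    (fun k x xi l => \big[Rplus/0]_(j < n) DPs j k x xi l).
Proof.
move=> HC.
have en : 0 < INR n + 1 by have := pos_INR n; lra.
split; [|split; [|split]].
- move=> x Hx xi; apply functional_extensionality => l; apply eq_bigr => j _.
  case: (HC j (ltn_ord j)) => C1 _; by rewrite C1.
- move=> k x Hk Hx; split.
  + move=> xi xi' H; apply functional_extensionality => l; apply eq_bigr => j _.
    case: (HC j (ltn_ord j)) => _ [C2 _]; by rewrite (ml_ext (C2 k x Hk Hx) H).
  + move=> xi i a b u v Hi; apply functional_extensionality => l.
    rewrite /vadd /vscale !big_distrr -big_split /=; apply eq_bigr => j _.
    case: (HC j (ltn_ord j)) => _ [C2 _]; case: (C2 k x Hk Hx) => _ E.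
    by rewrite E.
- move=> k x Hk Hx eps Heps.
  have [dl [Hdl H]] := fin_delta (n := n) (Q := fun j dl => forall y, inD rho y ->
     vnorm (vsub y x) < dl -> forall xi : nat -> vec m,
     (forall i, (i < k)%nat -> vnorm (xi i) <= 1) ->
     vnorm (vsub (vsub (DPs j k y xi) (DPs j k x xi)) (DPs j k.+1 x (scons (vsub y x) xi)))
       <= eps / (INR n + 1) * vnorm (vsub y x))
    ltac:(move=> j dl dl' H1 H2 y Hy Hyx; apply H1 => //; lra)
    ltac:(move=> j Hj; case: (HC j Hj) => _ [_ [C3 _]]; apply C3 => //;
          apply Rdiv_lt_0_compat; lra).
  exists dl; split => // y Hy Hyx xi Hxi.
  rewrite rem_sum; apply: vnorm_sum_small => //; first exact: vnorm_ge0.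
  move=> j; exact: H.
- move=> x Hx eps Heps.
  have [dl [Hdl H]] := fin_delta (n := n) (Q := fun j dl => forall y, inD rho y ->
     vnorm (vsub y x) < dl -> forall xi : nat -> vec m,
     (forall i, (i < r)%nat -> vnorm (xi i) <= 1) ->
     vnorm (vsub (DPs j r y xi) (DPs j r x xi)) <= eps / (INR n + 1) * 1)
    ltac:(move=> j dl dl' H1 H2 y Hy Hyx; apply H1 => //; lra)
    ltac:(move=> j Hj; case: (HC j Hj) => _ [_ [_ C4]]; rewrite Rmult_1_r; apply C4 => //;
          apply Rdiv_lt_0_compat; lra).
  exists dl; split => // y Hy Hyx xi Hxi.
  rewrite sub_sum -(Rmult_1_r eps); apply: vnorm_sum_small => //; first lra.
  move=> j; exact: H.
Qed.

(* The negation of a C^r map is C^r (composition with -I). *)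
Lemma Cr_neg (G : vec m -> vec d) DG : Cr_family rho r G DG ->
  Cr_family rho r (fun x => vscale (-1) (G x)) (fun k x xi => vscale (-1) (DG k x xi)).
Proof.
move=> HG.
have H := Cr_comp (fun i j => - (@mid d) i j) (A := @mid m) HG
  (fun x => ltac:(rewrite mv_mid; lra)).
have Em : forall v : vec d, mv (fun i j => - (@mid d) i j) v = vscale (-1) v.
  move=> v; apply functional_extensionality => i.
  rewrite /vscale -{2}(mv_mid v) /mv big_distrr /=; apply eq_bigr => j _; ring.
apply: (Cr_ext H).
- move=> x _; by rewrite Em mv_mid.
- move=> k x xi _; rewrite Em mv_mid; do 2 f_equal.
  apply functional_extensionality => i; by rewrite mv_mid.
Qed.

Lemma Cr_sub (F G : vec m -> vec d) DF DG : Cr_family rho r F DF -> Cr_family rho r G DG ->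
  Cr_family rho r (fun x => vsub (F x) (G x)) (fun k x xi => vsub (DF k x xi) (DG k x xi)).
Proof.
move=> HF HG.
have H := Cr_sum (n := 2) (Ps := fun j => if j == 0%nat then F else (fun x => vscale (-1) (G x)))
   (DPs := fun j => if j == 0%nat then DF else (fun k x xi => vscale (-1) (DG k x xi)))
   (fun j Hj => ltac:(case: j Hj => [|j] Hj /=; [exact HF | exact: Cr_neg HG])).
apply: (Cr_ext H) => *; apply functional_extensionality => l;
  rewrite !big_ord_recr big_ord0 /= /vsub /vscale; ring.
Qed.

End Closure.

(** * Uniqueness of the derivatives of a C^r family *)

Section Uniqueness.
Variables (m d : nat) (rho : R) (r : nat).

(* If two families agree at order k on D, their (k+1)-st derivatives at x
   are first-order approximations of the same increments, so they differ by
   at most 2 e ||y - x|| in the direction y - x, for y close to x. *)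
Lemma next_derivs_close (P : vec m -> vec d) DP DP' k x (eta : nat -> vec m) e :
  Cr_family rho r P DP -> Cr_family rho r P DP' -> (k < r)%nat -> inD rho x ->
  (forall i, (i < k)%nat -> vnorm (eta i) <= 1) ->
  (forall y, inD rho y -> DP k y eta = DP' k y eta) -> 0 < e ->
  exists delta, 0 < delta /\ forall y, inD rho y -> vnorm (vsub y x) < delta ->
    vnorm (vsub (DP k.+1 x (scons (vsub y x) eta)) (DP' k.+1 x (scons (vsub y x) eta)))
      <= 2 * e * vnorm (vsub y x).
Proof.
move=> [_ [_ [C3 _]]] [_ [_ [D3 _]]] Hk Hx Heta Hagree He.
have [d1 [Hd1 H1]] := C3 k x Hk Hx e He.
have [d2 [Hd2 H2]] := D3 k x Hk Hx e He.
exists (Rmin d1 d2); split; first exact: Rmin_pos.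
move=> y Hy Hyx.
have Hy1 : vnorm (vsub y x) < d1 by have := Rmin_l d1 d2; lra.
have Hy2 : vnorm (vsub y x) < d2 by have := Rmin_r d1 d2; lra.
have -> : vsub (DP k.+1 x (scons (vsub y x) eta)) (DP' k.+1 x (scons (vsub y x) eta)) =
    vsub (vsub (vsub (DP' k y eta) (DP' k x eta)) (DP' k.+1 x (scons (vsub y x) eta)))
         (vsub (vsub (DP k y eta) (DP k x eta)) (DP k.+1 x (scons (vsub y x) eta))).
  rewrite (Hagree y Hy) (Hagree x Hx).
  apply functional_extensionality => l; rewrite /vsub; ring.
apply: Rle_trans (vnorm_sub _ _) _.
have := H1 y Hy Hy1 eta Heta; have := H2 y Hy Hy2 eta Heta; lra.
Qed.

(* Hence the (k+1)-st derivatives agree in every direction z - x, z in D: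
   by homogeneity, it suffices to test along a short piece of the segment
   from x towards z. *)
Lemma Cr_next_deriv_agree (P : vec m -> vec d) DP DP' k x z (eta : nat -> vec m) :
  Cr_family rho r P DP -> Cr_family rho r P DP' -> (k < r)%nat ->
  inD rho x -> inD rho z -> (forall i, (i < k)%nat -> vnorm (eta i) <= 1) ->
  (forall y, inD rho y -> DP k y eta = DP' k y eta) ->
  DP k.+1 x (scons (vsub z x) eta) = DP' k.+1 x (scons (vsub z x) eta).
Proof.
move=> HC HC' Hk Hx Hz Heta Hagree.
have M1 := proj1 (proj2 HC) k.+1 x Hk Hx; have M2 := proj1 (proj2 HC') k.+1 x Hk Hx.
set w := vsub z x.
set L := vsub (DP k.+1 x (scons w eta)) (DP' k.+1 x (scons w eta)).
suff HL : L = vzero.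
  apply functional_extensionality => l.
  have : L l = 0 by rewrite HL.
  rewrite /L /vsub; lra.
case: (Req_dec (vnorm w) 0) => Ew.
  rewrite /L (vnorm_eq0 Ew) (slot0_zero _ M1) (slot0_zero _ M2).
  apply functional_extensionality => l; rewrite /vsub /vzero; ring.
have Hw : 0 < vnorm w by apply: Rnot_le_lt => H; apply: Ew; have := vnorm_ge0 w; lra.
apply vnorm_eq0; apply: (le_eps (c := 2 * vnorm w)); [apply vnorm_ge0 | lra |].
move=> e He.
have [dl [Hdl Hclose]] := next_derivs_close HC HC' Hk Hx Heta Hagree He.
have [t [Ht Htw]] := exists_small_step Hw Hdl.
have Nyx : vnorm (vsub (seg x z t) x) = t * vnorm w.
  by rewrite seg_sub vnorm_scale Rabs_right; last lra.
have := Hclose _ (inD_seg Hx Hz (conj (Rlt_le _ _ (proj1 Ht)) (proj2 Ht))) ltac:(lra).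
rewrite Nyx seg_sub -/w (slot0_scale _ _ _ M1) (slot0_scale _ _ _ M2).
have -> : vsub (vscale t (DP k.+1 x (scons w eta))) (vscale t (DP' k.+1 x (scons w eta))) =
    vscale t L.
  apply functional_extensionality => l; rewrite /L /vsub /vscale; ring.
rewrite vnorm_scale Rabs_right; last lra.
move=> Hstep; apply (Rmult_le_reg_l t); first lra.
have -> : t * (e * (2 * vnorm w)) = 2 * e * (t * vnorm w) by ring.
done.
Qed.

(* Two (k+1)-linear maps agreeing in the first slot on all directions z - x,
   z in D, agree: D - x contains a multiple of every vector. *)
Lemma slot0_agree_from_box k (T1 T2 : mlmap m d) (x : vec m) (eta : nat -> vec m) :
  0 < rho -> is_multilinear k.+1 T1 -> is_multilinear k.+1 T2 ->
  (forall z, inD rho z -> T1 (scons (vsub z x) eta) = T2 (scons (vsub z x) eta)) ->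
  forall w, T1 (scons w eta) = T2 (scons w eta).
Proof.
move=> rho0 M1 M2 Hz w.
have Hw := vnorm_ge0 w.
set s := rho / (vnorm w + 1).
have Hs : 0 < s by apply Rdiv_lt_0_compat; lra.
have Hsw : s * vnorm w <= rho.
  have -> : s * vnorm w = rho - s by rewrite /s; field; lra.
  lra.
have Hp : inD rho (vscale (s / 2) w) by rewrite /inD vnorm_scale Rabs_right; lra.
have Hm : inD rho (vscale (- (s / 2)) w) by rewrite /inD vnorm_scale Rabs_left; lra.
have Esw : vscale s w = vsub (vsub (vscale (s / 2) w) x) (vsub (vscale (- (s / 2)) w) x).
  apply functional_extensionality => l; rewrite /vsub /vscale; field.
have E : vscale s (T1 (scons w eta)) = vscale s (T2 (scons w eta)).
  by rewrite -(slot0_scale _ _ _ M1) -(slot0_scale _ _ _ M2) Esw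
     (slot0_sub _ _ _ M1) (slot0_sub _ _ _ M2) (Hz _ Hp) (Hz _ Hm).
apply functional_extensionality => l.
have := f_equal (fun f => f l) E; rewrite /vscale => El.
by apply (Rmult_eq_reg_l s) => //; lra.
Qed.

Lemma Cr_unique (P : vec m -> vec d) DP DP' : 0 < rho ->
  Cr_family rho r P DP -> Cr_family rho r P DP' ->
  forall k, (k <= r)%nat -> forall x, inD rho x -> forall xi : nat -> vec m,
  (forall i, (i < k)%nat -> vnorm (xi i) <= 1) -> DP k x xi = DP' k x xi.
Proof.
move=> rho0 HC HC'; have [C1 [C2 _]] := HC; have [D1 [D2 _]] := HC'.
elim=> [|k IH] Hk x Hx xi Hxi; first by rewrite C1 // D1.
rewrite -(shift_scons xi).
apply: (slot0_agree_from_box rho0 (C2 k.+1 x Hk Hx) (D2 k.+1 x Hk Hx)) => z Hz.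
apply: (Cr_next_deriv_agree HC HC') => //.
- by move=> i Hi; apply Hxi.
- move=> y Hy; apply: IH => //; first exact: ltnW.
  by move=> i Hi; apply Hxi.
Qed.

End Uniqueness.

(** * The mean value inequality *)

(* clamping to [0,1], used to extend a function on [0,1] to all of R *)
Definition clamp (t : R) := Rmax 0 (Rmin 1 t).

Lemma clamp_in t : 0 <= clamp t <= 1.
Proof.
rewrite /clamp; split; first apply Rmax_l.
apply Rmax_lub; [lra | apply Rmin_l].
Qed.

Lemma clamp_id t : 0 <= t <= 1 -> clamp t = t.
Proof. move=> Ht; rewrite /clamp Rmin_right; last lra. rewrite Rmax_right; lra. Qed.

Lemma clamp_lip s t : 0 <= t <= 1 -> Rabs (clamp s - t) <= Rabs (s - t).
Proof.
move=> Ht; rewrite /clamp.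
case: (Rle_dec s 0) => H1.
- rewrite Rmin_right; last lra. rewrite Rmax_left // !Rabs_left1; lra.
- case: (Rle_dec s 1) => H2.
  + rewrite Rmin_right // Rmax_right; lra.
  + rewrite Rmin_left; last lra. rewrite Rmax_right; last lra.
    rewrite !Rabs_right; lra.
Qed.

Lemma step_lt (a d1 h : R) : 0 <= a -> Rabs h < d1 / (a + 1) -> Rabs h * a < d1.
Proof.
move=> Ha Hh; have Hp := Rabs_pos h.
have : Rabs h * (a + 1) < d1.
  have -> : d1 = d1 / (a + 1) * (a + 1) by field; lra.
  apply Rmult_lt_compat_r; lra.
nra.
Qed.

Section MeanValue.
Variables (m d : nat) (rho : R) (r : nat) (P : vec m -> vec d)
  (DP : nat -> vec m -> mlmap m d).
Hypothesis HP : Cr_family rho r P DP.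

(* D^k P is locally Lipschitz on D (k < r): near x the increment is the
   linear term D^(k+1) P(x)(y - x) up to an error ||y - x||. *)
Lemma Cr_local_lipschitz k x : (k < r)%nat -> inD rho x ->
  exists dl K, [/\ 0 < dl, 0 <= K & forall y, inD rho y -> vnorm (vsub y x) < dl ->
    forall xi : nat -> vec m, (forall i, (i < k)%nat -> vnorm (xi i) <= 1) ->
    vnorm (vsub (DP k y xi) (DP k x xi)) <= K * vnorm (vsub y x)].
Proof.
move=> Hk Hx; have [_ [C2 [C3 _]]] := HP.
have [dl [Hdl H1]] := C3 k x Hk Hx 1 ltac:(lra).
have M1 := C2 k.+1 x Hk Hx.
have [Kx [Kx0 HKx]] := ml_bounded M1.
exists dl, (1 + Kx); split => // [|y Hy Hyx xi Hxi]; first lra.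
have -> : vsub (DP k y xi) (DP k x xi) =
    vadd (vsub (vsub (DP k y xi) (DP k x xi)) (DP k.+1 x (scons (vsub y x) xi)))
         (DP k.+1 x (scons (vsub y x) xi)).
  apply functional_extensionality => j; rewrite /vsub /vadd; ring.
apply: Rle_trans (vnorm_add _ _) _.
have := H1 y Hy Hyx xi Hxi; have := UB_slot0 (vsub y x) M1 HKx Hxi; lra.
Qed.

Lemma seg_is_derive k u v (xi : nat -> vec m) l t :
  (k < r)%nat -> inD rho u -> inD rho v -> (forall i, (i < k)%nat -> vnorm (xi i) <= 1) ->
  0 < t < 1 ->
  is_derive (fun s => DP k (seg v u (clamp s)) xi l) t
            (DP k.+1 (seg v u t) (scons (vsub u v) xi) l).
Proof.
move=> Hk Hu Hv Hxi Ht; have [_ [C2 [C3 _]]] := HP.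
set a := vnorm (vsub u v); have Ha : 0 <= a := vnorm_ge0 _.
apply is_derive_Reals => eps Heps.
have Hx : inD rho (seg v u t) by apply inD_seg => //; lra.
have [d1 [Hd1 H1]] := C3 k _ Hk Hx (eps / (2 * (a + 1))) ltac:(apply Rdiv_lt_0_compat; lra).
have Hdp : 0 < Rmin (d1 / (a + 1)) (Rmin t (1 - t)).
  apply Rmin_pos; [apply Rdiv_lt_0_compat; lra | apply Rmin_pos; lra].
exists (mkposreal _ Hdp) => h Hh0 Hh /=.
have Hh1 : Rabs h < d1 / (a + 1) by apply: Rlt_le_trans Hh (Rmin_l _ _).
have Hh2 : Rabs h < Rmin t (1 - t) by apply: Rlt_le_trans Hh (Rmin_r _ _).
have Hth : 0 <= t + h <= 1.
  have := Rmin_l t (1 - t); have := Rmin_r t (1 - t); have := Rabs_def2 _ _ Hh2; lra.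
rewrite (clamp_id Hth) (clamp_id (t := t)); last lra.
have Eyx : vsub (seg v u (t + h)) (seg v u t) = vscale h (vsub u v).
  by rewrite seg_sub2; f_equal; ring.
have Hyd : vnorm (vsub (seg v u (t + h)) (seg v u t)) < d1.
  by rewrite Eyx vnorm_scale; apply: step_lt.
have := H1 _ (inD_seg Hv Hu (conj (proj1 Hth) (proj2 Hth))) Hyd xi Hxi.
rewrite Eyx (slot0_scale _ _ _ (C2 k.+1 _ Hk Hx)) => Hrem.
set df := DP k.+1 (seg v u t) (scons (vsub u v) xi) l.
have Hc := vnorm_coord (vsub
          (vsub (DP k (seg v u (t + h)) xi) (DP k (seg v u t) xi))
          (vscale h (DP k.+1 (seg v u t) (scons (vsub u v) xi)))) l.
rewrite /vsub /vscale -/df in Hc.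
have Hhp : 0 < Rabs h by apply Rabs_pos_lt.
have -> : (DP k (seg v u (t + h)) xi l - DP k (seg v u t) xi l) / h - df
     = (DP k (seg v u (t + h)) xi l - DP k (seg v u t) xi l - h * df) / h by field.
rewrite Rabs_div //; apply (Rmult_lt_reg_r (Rabs h)) => //.
rewrite /Rdiv Rmult_assoc Rinv_l; last lra. rewrite Rmult_1_r.
apply: Rle_lt_trans Hc _; apply: Rle_lt_trans Hrem _.
rewrite vnorm_scale -/a.
have : eps / (2 * (a + 1)) * a < eps.
  apply (Rmult_lt_reg_r (2 * (a + 1))); first lra.
  have -> : eps / (2 * (a + 1)) * a * (2 * (a + 1)) = eps * a by field; lra.
  nra.
nra.
Qed.

Lemma seg_continuity k u v (xi : nat -> vec m) l t :
  (k < r)%nat -> inD rho u -> inD rho v -> (forall i, (i < k)%nat -> vnorm (xi i) <= 1) ->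
  0 <= t <= 1 -> continuity_pt (fun s => DP k (seg v u (clamp s)) xi l) t.
Proof.
move=> Hk Hu Hv Hxi Ht.
set a := vnorm (vsub u v); have Ha : 0 <= a := vnorm_ge0 _.
have [dl [K [Hdl K0 HL]]] := Cr_local_lipschitz Hk (inD_seg Hv Hu Ht).
move=> eps Heps.
set c := (K + 1) * (a + 1).
have Hc : 0 < c by rewrite /c; apply Rmult_lt_0_compat; lra.
exists (Rmin (dl / (a + 1)) (eps / c)); split.
  apply Rmin_pos; apply Rdiv_lt_0_compat; lra.
move=> s [_ Hs]; rewrite /= /R_dist in Hs.
have Hs1 : Rabs (s - t) < dl / (a + 1) by apply: Rlt_le_trans Hs (Rmin_l _ _).
have Hs2 : Rabs (s - t) < eps / c by apply: Rlt_le_trans Hs (Rmin_r _ _).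
have Hcl := clamp_lip s Ht.
rewrite /= /R_dist (clamp_id Ht).
set s' := clamp s in Hcl *.
have Nyx : vnorm (vsub (seg v u s') (seg v u t)) = Rabs (s' - t) * a.
  by rewrite seg_sub2 vnorm_scale.
have Hyd : vnorm (vsub (seg v u s') (seg v u t)) < dl.
  rewrite Nyx; apply: Rle_lt_trans (step_lt Ha Hs1); exact: Rmult_le_compat_r.
have Hinc := HL _ (inD_seg Hv Hu (clamp_in s)) Hyd xi Hxi.
apply: Rle_lt_trans (vnorm_coord (vsub (DP k (seg v u s') xi) (DP k (seg v u t) xi)) l) _.
apply: Rle_lt_trans Hinc _; rewrite Nyx.
have := Rabs_pos (s' - t); have := Rabs_pos (s - t) => H0 H0'.
have H1 : Rabs (s' - t) * a <= Rabs (s - t) * (a + 1) by nra.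
have H2 : Rabs (s - t) * c < eps.
  have -> : eps = eps / c * c by field; lra.
  apply Rmult_lt_compat_r; lra.
rewrite /c in H2; nra.
Qed.

Lemma Cr_mvt k u v (xi : nat -> vec m) K :
  (k < r)%nat -> inD rho u -> inD rho v ->
  (forall i, (i < k)%nat -> vnorm (xi i) <= 1) ->
  (forall t, 0 <= t <= 1 -> vnorm (DP k.+1 (seg v u t) (scons (vsub u v) xi)) <= K) ->
  vnorm (vsub (DP k u xi) (DP k v xi)) <= K.
Proof.
move=> Hk Hu Hv Hxi HK.
have K0 : 0 <= K by apply: Rle_trans (HK 0 ltac:(lra)); apply vnorm_ge0.
apply vnorm_le => // l.
have := MVT_gen (fun s => DP k (seg v u (clamp s)) xi l) 0 1
  (fun t => DP k.+1 (seg v u t) (scons (vsub u v) xi) l).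
rewrite Rmin_left; last lra. rewrite Rmax_right; last lra.
case=> [t Ht|t Ht|c [Hc E]].
- exact: seg_is_derive.
- exact: seg_continuity.
rewrite !clamp_id in E; try lra.
rewrite seg0 seg1 Rminus_0_r Rmult_1_r in E.
rewrite /vsub E; apply: Rle_trans (vnorm_coord _ _) _; apply HK; lra.
Qed.

Lemma Cr_rem k u v (xi : nat -> vec m) K :
  (k < r)%nat -> inD rho u -> inD rho v ->
  (forall i, (i < k)%nat -> vnorm (xi i) <= 1) ->
  (forall t, 0 <= t <= 1 -> vnorm (DP k.+1 (seg v u t) (scons (vsub u v) xi)) <= K) ->
  vnorm (vsub (vsub (DP k u xi) (DP k v xi)) (DP k.+1 v (scons (vsub u v) xi))) <= 2 * K.
Proof.
move=> Hk Hu Hv Hxi HK.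
apply: Rle_trans (vnorm_sub _ _) _.
have := Cr_mvt Hk Hu Hv Hxi HK; have := HK 0 ltac:(lra); rewrite seg0; lra.
Qed.

Lemma Cr_taylor H :
  (forall i, (i < r)%nat -> forall xi, DP i vzero xi = vzero) ->
  0 <= H -> (forall z, inD rho z -> UB r (DP r z) H) ->
  forall j k, (k + j)%nat = r -> forall z, inD rho z -> UB k (DP k z) (H * vnorm z ^ j).
Proof.
move=> H0 Hp Hr; elim=> [|j IH] k Hkj z Hz.
  rewrite addn0 in Hkj; subst k; rewrite pow_O Rmult_1_r; exact: Hr.
have Hk : (k < r)%nat by rewrite -Hkj addnS ltnS leq_addr.
have Hk1 : (k.+1 + j)%nat = r by rewrite addSn -addnS.
have HzD : inD rho (@vzero m).
  by rewrite /inD vnorm_zero; apply: Rle_trans (vnorm_ge0 z) Hz.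
have [_ [C2 _]] := HP.
move=> xi Hxi.
have -> : DP k z xi = vsub (DP k z xi) (DP k vzero xi).
  rewrite H0 //; apply functional_extensionality => l; rewrite /vsub /vzero; ring.
apply: (Cr_mvt Hk Hz HzD Hxi) => t Ht.
have Hs : inD rho (seg vzero z t) by apply inD_seg.
have := UB_slot0 (vsub z vzero) (C2 k.+1 _ Hk Hs) (IH _ Hk1 _ Hs) Hxi.
have -> : vsub z vzero = z by apply functional_extensionality => i; rewrite /vsub /vzero; ring.
rewrite seg_zero vnorm_scale Rabs_right; last lra.
move=> H1; apply: Rle_trans H1 _.
have Hzn := vnorm_ge0 z.
have H2 : (t * vnorm z) ^ j <= vnorm z ^ j.
  apply pow_incr; split; nra.
have : vnorm z * (H * (t * vnorm z) ^ j) <= vnorm z * (H * vnorm z ^ j).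
  apply Rmult_le_compat_l => //; exact: Rmult_le_compat_l.
rewrite /=; lra.
Qed.

End MeanValue.

(** * Boundedness of D^r P by compactness of D *)

Lemma glue_intervals (Z : R -> R -> R -> Prop) a c c1 cs ds dc Mc Ms :
  (forall dl dl' M M' s, Z dl M s -> 0 < dl' <= dl -> M <= M' -> Z dl' M' s) ->
  0 < dc -> 0 < ds -> cs - ds / 2 < c -> c1 <= cs + ds / 2 ->
  (forall s, a <= s <= c -> Z dc Mc s) -> (forall s, Rabs (s - cs) < ds -> Z ds Ms s) ->
  forall s, a <= s <= c1 -> Z (Rmin dc ds) (Rmax Mc Ms) s.
Proof.
move=> Hmono Hdc Hds Hc Hc1 HMc HMs s Hs.
case: (Rle_dec s c) => Hsc.
- apply: Hmono (HMc s ltac:(lra)) _ (Rmax_l _ _); split; [exact: Rmin_pos | apply Rmin_l].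
- apply: Hmono (HMs s _) _ (Rmax_r _ _); first by apply Rabs_def1; lra.
  split; [exact: Rmin_pos | apply Rmin_r].
Qed.

(* Compactness of [a, b]: a locally uniform property, monotone in its
   parameters, holds uniformly on [a, b] (least upper bound argument). *)
Lemma compact_1d (a b : R) (Z : R -> R -> R -> Prop) : a <= b ->
  (forall dl dl' M M' s, Z dl M s -> 0 < dl' <= dl -> M <= M' -> Z dl' M' s) ->
  (forall t, a <= t <= b -> exists dl, 0 < dl /\ exists M, forall s, Rabs (s - t) < dl -> Z dl M s) ->
  exists dl, 0 < dl /\ exists M, forall s, a <= s <= b -> Z dl M s.
Proof.
move=> Hab Hmono Hloc.
set E := fun c => a <= c <= b /\ exists dl, 0 < dl /\ exists M, forall s, a <= s <= c -> Z dl M s.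
have Ea : E a.
  split; first lra.
  have [dl [Hdl [M HM]]] := Hloc a ltac:(lra).
  exists dl; split => //; exists M => s Hs; apply HM.
  have -> : s - a = 0 by lra. rewrite Rabs_R0; lra.
have [cs [Hub Hlub]] : {c | is_lub E c}.
  apply completeness; last by exists a.
  exists b => c [Hc _]; lra.
have Hcs1 : a <= cs by apply Hub.
have Hcs2 : cs <= b by apply Hlub => c [Hc _]; lra.
have [ds [Hds [Ms HMs]]] := Hloc cs ltac:(lra).
have [c [[Hc1 [dc [Hdc [Mc HMc]]]] Hc]] : exists c, E c /\ cs - ds / 2 < c.
  apply NNPP => Hn.
  have : cs <= cs - ds / 2.
    apply Hlub => c Ec; apply Rnot_lt_le => Hlt; apply Hn; by exists c.
  lra.
(* the property extends up to c1 = min b (cs + ds/2), so that c1 = b *)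
set c1 := Rmin b (cs + ds / 2).
have Ec1 : E c1.
  split; first by split; [apply Rmin_glb; lra | apply Rmin_l].
  exists (Rmin dc ds); split; first exact: Rmin_pos.
  exists (Rmax Mc Ms); apply: (glue_intervals Hmono Hdc Hds Hc (Rmin_r _ _) HMc HMs).
have Hc1b : c1 = b.
  have Hc1le : c1 <= cs by apply Hub.
  rewrite /c1 in Hc1le *; case: (Rle_dec b (cs + ds / 2)) => H4.
  - by rewrite Rmin_left.
  - rewrite Rmin_right in Hc1le; lra.
rewrite Hc1b in Ec1; case: Ec1 => _ [dl [Hdl [M HM]]].
by exists dl; split => //; exists M.
Qed.

Section Compactness.
Variables (m : nat) (rho : R).

Definition xupd (x : vec m) (i : 'I_m) (t : R) : vec m := fun j => if j == i then t else x j.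

(* Compactness of the box D: a locally bounded quantity is bounded on D.
   The coordinates are released one at a time using compact_1d. *)
Lemma box_compact (Q : vec m -> R -> Prop) : 0 <= rho ->
  (forall y M M', Q y M -> M <= M' -> Q y M') ->
  (forall x, inD rho x -> exists dl, 0 < dl /\ exists M, forall y, inD rho y ->
      vnorm (vsub y x) < dl -> Q y M) ->
  exists M, forall y, inD rho y -> Q y M.
Proof.
move=> rho0 Hmono Hloc.
pose Good (S : seq 'I_m) x := exists dl, 0 < dl /\ exists M, forall y, inD rho y ->
    (forall i, i \notin S -> Rabs (y i - x i) < dl) -> Q y M.
have HG : forall S x, inD rho x -> Good S x.
  elim=> [|i S IH] x Hx.
  - have [dl [Hdl [M HM]]] := Hloc x Hx.
    exists dl; split => //; exists M => y Hy Hyx; apply HM => //.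
    apply vnorm_lt => // j; rewrite /vsub; exact: Hyx.
  - have := compact_1d (a := - rho) (b := rho)
      (Z := fun dl M s => forall y, inD rho y ->
             (forall j, j \notin i :: S -> Rabs (y j - x j) < dl) -> y i = s -> Q y M) ltac:(lra).
    case.
    + move=> dl dl' M M' s H1 H2 H3 y Hy Hyx Hyi; apply: Hmono (H1 y Hy _ Hyi) H3.
      move=> j Hj; have := Hyx j Hj; lra.
    + move=> t Ht.
      have Hx' : inD rho (xupd x i t).
        apply vnorm_le => // j; rewrite /xupd; case: (j == i).
        * apply Rabs_le; lra.
        * exact: Rle_trans (vnorm_coord _ _) Hx.
      have [dl [Hdl [M HM]]] := IH _ Hx'.
      exists dl; split => //; exists M => s Hs y Hy Hyx Hyi; apply HM => // j Hj.
      rewrite /xupd; case: (eqVneq j i) => [E|E].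
      * by rewrite E Hyi.
      * apply Hyx; by rewrite in_cons negb_or E.
    + move=> dl [Hdl [M HM]]; exists dl; split => //; exists M => y Hy Hyx.
      apply: (HM (y i)) => //.
      have := Rle_trans _ _ _ (vnorm_coord y i) Hy.
      have := Rle_abs (y i); have := Rle_abs (- y i); rewrite Rabs_Ropp; lra.
have H0 : inD rho (@vzero m) by rewrite /inD vnorm_zero.
have [dl [Hdl [M HM]]] := HG (enum 'I_m) _ H0.
exists M => y Hy; apply HM => // i; by rewrite mem_enum.
Qed.

Lemma Cr_bounded d r (P : vec m -> vec d) DP : 0 <= rho -> Cr_family rho r P DP ->
  exists H, 0 <= H /\ forall z, inD rho z -> UB r (DP r z) H.
Proof.
move=> rho0 [C1 [C2 [C3 C4]]].
have := box_compact (Q := fun y M => 0 <= M /\ UB r (DP r y) M) rho0.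
case.
- move=> y M M' [H1 H2] H3; split; first lra.
  move=> xi Hxi; have := H2 xi Hxi; lra.
- move=> x Hx.
  have [dl [Hdl H]] := C4 x Hx 1 ltac:(lra).
  have [Kx [Kx0 HKx]] := ml_bounded (C2 r x (leqnn r) Hx).
  exists dl; split => //; exists (Kx + 1) => y Hy Hyx; split; first lra.
  move=> xi Hxi; have := H y Hy Hyx xi Hxi; have := HKx xi Hxi.
  have := vnorm_add (vsub (DP r y xi) (DP r x xi)) (DP r x xi).
  have -> : vadd (vsub (DP r y xi) (DP r x xi)) (DP r x xi) = DP r y xi.
    apply functional_extensionality => l; rewrite /vadd /vsub; ring.
  lra.
- move=> M HM; exists M; split.
  + have H0 : inD rho (@vzero m) by rewrite /inD vnorm_zero.
    by case: (HM _ H0).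
  + move=> z Hz; by case: (HM z Hz).
Qed.

End Compactness.

(** * Series of reals and of vectors *)

Lemma ex_series_cmp (a b : nat -> R) : (forall n, Rabs (a n) <= b n) -> ex_series b -> ex_series a.
Proof. move=> H Hb; exact: (ex_series_le a b). Qed.

Lemma Series_abs_le (a b : nat -> R) : (forall n, Rabs (a n) <= b n) -> ex_series b ->
  Rabs (Series a) <= Series b.
Proof.
move=> H Hb.
have Ha : ex_series (fun n => Rabs (a n)).
  apply: (ex_series_cmp (b := b)) => // n; rewrite Rabs_Rabsolu; apply H.
apply: Rle_trans (Series_Rabs _ Ha) _.
apply Series_le => // n; split; [apply Rabs_pos | apply H].
Qed.

Lemma Series_ge0 (b : nat -> R) : (forall n, 0 <= b n) -> ex_series b -> 0 <= Series b.
Proof.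
move=> H Hb; have E : Series (fun n => 0 * b n) = 0 by rewrite Series_scal_l; ring.
rewrite -E; apply Series_le => // n; split; [lra | rewrite Rmult_0_l; apply H].
Qed.

Lemma ex_series_shift (a : nat -> R) n : ex_series a -> ex_series (fun k => a (n + k)%nat).
Proof. move=> Ha; exact: (proj1 (ex_series_incr_n a n) Ha). Qed.

Lemma Series_split (a : nat -> R) n : ex_series a ->
  Series a = \big[Rplus/0]_(i < n) a i + Series (fun k => a (n + k)%nat).
Proof.
move=> Ha; elim: n => [|n IH].
- rewrite big_ord0 Rplus_0_l; by apply Series_ext.
- rewrite IH big_ord_recr /= (Series_incr_1 _ (ex_series_shift n Ha)).
  have -> : Series (fun k => a (n + k.+1)%nat) = Series (fun k => a (n.+1 + k)%nat).
    apply Series_ext => k; by rewrite addnS addSn.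
  rewrite addn0; ring.
Qed.

Lemma sum_n_big (a : nat -> R) n : sum_n a n = \big[Rplus/0]_(i < n.+1) a i.
Proof.
elim: n => [|n IH]; first by rewrite sum_O big_ord_recr big_ord0 /= Rplus_0_l.
by rewrite sum_Sn IH (big_ord_recr n.+1).
Qed.

Lemma tail_small (a : nat -> R) e : ex_series a -> 0 < e ->
  exists S, Rabs (Series (fun k => a (S + k)%nat)) < e.
Proof.
move=> Ha He.
have H2 : is_lim_seq (sum_n a) (Series a) by exact: Series_correct.
have [N HN] := proj2 (is_lim_seq_spec _ _) H2 (mkposreal _ He).
exists N.+1; have := HN N (le_n N) => /=.
rewrite sum_n_big Rabs_minus_sym.
by have -> : Series (fun k => a (N.+1 + k)%nat) = Series a - \big[Rplus/0]_(i < N.+1) a i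
  by rewrite (Series_split N.+1 Ha); ring.
Qed.

Lemma ex_series_bounded (a : nat -> R) M : (forall n, 0 <= a n) ->
  (forall n, \big[Rplus/0]_(i < n.+1) a i <= M) -> ex_series a.
Proof.
move=> Hp HM.
have [l Hl] : ex_finite_lim_seq (sum_n a).
  apply: (ex_finite_lim_seq_incr _ M).
  - move=> n; rewrite sum_Sn; have := Hp n.+1; rewrite /plus /=; lra.
  - move=> n; rewrite sum_n_big; apply HM.
by exists l.
Qed.

Lemma ex_series_zero : ex_series (fun _ : nat => 0).
Proof. apply: (ex_series_bounded (M := 0)) => n /=; [lra | rewrite big1 //; lra]. Qed.

Lemma Series_zero : Series (fun _ : nat => 0) = 0.
Proof.
transitivity (Series (fun _ : nat => 0 * 0)); first by apply Series_ext => n; ring.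
rewrite Series_scal_l; ring.
Qed.

Lemma Series_delta c : Series (fun n => if n == 0%nat then c else 0) = c.
Proof.
rewrite Series_incr_1; last first.
  apply (proj2 (ex_series_incr_1 _)); exact: ex_series_ext ex_series_zero.
have -> : Series (fun k => if k.+1 == 0%nat then c else 0) = 0.
  transitivity (Series (fun _ : nat => 0)); [by apply Series_ext | exact: Series_zero].
rewrite /=; ring.
Qed.

Lemma ex_series_shiftj (g : nat -> R) j : ex_series g ->
  ex_series (fun n => if (j <= n)%nat then g (n - j)%nat else 0).
Proof.
move=> Hg; apply (proj2 (ex_series_incr_n _ j)).
apply: ex_series_ext Hg => n.
have -> : (j <= (j + n)%coq_nat)%nat by change (Nat.add j n) with (addn j n); apply leq_addr.
change (Nat.add j n) with (addn j n); by rewrite addKn.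
Qed.

Lemma Series_shiftj (g : nat -> R) j : ex_series g ->
  Series (fun n => if (j <= n)%nat then g (n - j)%nat else 0) = Series g.
Proof.
move=> Hg; rewrite (Series_split j (ex_series_shiftj j Hg)) big1; last first.
  by move=> i _; have -> : (j <= i)%nat = false by apply/negbTE; rewrite -ltnNge ltn_ord.
rewrite Rplus_0_l; apply Series_ext => k; by rewrite leq_addr addKn.
Qed.

Lemma Series_bigsum n (F : 'I_n -> nat -> R) : (forall j, ex_series (F j)) ->
  ex_series (fun s => \big[Rplus/0]_(j < n) F j s) /\
  Series (fun s => \big[Rplus/0]_(j < n) F j s) = \big[Rplus/0]_(j < n) Series (F j).
Proof.
elim: n F => [|n IH] F HF.
- split; first by apply: ex_series_ext ex_series_zero => s; rewrite big_ord0.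
  rewrite big_ord0; transitivity (Series (fun _ : nat => 0)); last exact: Series_zero.
  apply Series_ext => s; by rewrite big_ord0.
- have [E1 E2] := IH (fun j => F (widen_ord (leqnSn n) j)) (fun j => HF _).
  have E3 : forall s, \big[Rplus/0]_(j < n.+1) F j s =
      \big[Rplus/0]_(j < n) F (widen_ord (leqnSn n) j) s + F ord_max s.
    by move=> s; rewrite big_ord_recr.
  split.
  + apply: ex_series_ext (ex_series_plus _ _ E1 (HF ord_max)) => s; by rewrite E3.
  + by rewrite (Series_ext _ _ E3) Series_plus // E2 big_ord_recr.
Qed.

Section VectorSeries.
Variable d : nat.

Definition vseries (f : nat -> vec d) : vec d := fun l => Series (fun s => f s l).

Lemma vseries_ex (f : nat -> vec d) b : (forall s, vnorm (f s) <= b s) -> ex_series b ->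
  forall l, ex_series (fun s => f s l).
Proof.
move=> H Hb l; apply: (ex_series_cmp (b := b)) => // s.
exact: Rle_trans (vnorm_coord _ _) (H s).
Qed.

Lemma vseries_bound (f : nat -> vec d) b : (forall s, vnorm (f s) <= b s) -> ex_series b ->
  vnorm (vseries f) <= Series b.
Proof.
move=> H Hb; apply vnorm_le.
- apply Series_ge0 => // n; apply: Rle_trans (H n); apply vnorm_ge0.
- move=> l; apply Series_abs_le => // s; exact: Rle_trans (vnorm_coord _ _) (H s).
Qed.

Lemma vseries_lin (f g : nat -> vec d) a b :
  (forall l, ex_series (fun s => f s l)) -> (forall l, ex_series (fun s => g s l)) ->
  vseries (fun s => vadd (vscale a (f s)) (vscale b (g s))) =
  vadd (vscale a (vseries f)) (vscale b (vseries g)).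
Proof.
move=> Hf Hg; apply functional_extensionality => l; rewrite /vseries /vadd /vscale.
by rewrite -!Series_scal_l Series_plus //; apply: ex_series_scal_l.
Qed.

Lemma vseries_sub (f g : nat -> vec d) :
  (forall l, ex_series (fun s => f s l)) -> (forall l, ex_series (fun s => g s l)) ->
  vseries (fun s => vsub (f s) (g s)) = vsub (vseries f) (vseries g).
Proof.
move=> Hf Hg; apply functional_extensionality => l; rewrite /vseries /vsub.
by rewrite Series_minus.
Qed.

Lemma vseries_ext (f g : nat -> vec d) : (forall s, f s = g s) -> vseries f = vseries g.
Proof. move=> H; apply functional_extensionality => l; apply Series_ext => s; by rewrite H. Qed.

Lemma vseries_head_tail (f : nat -> vec d) b S :
  (forall s, vnorm (f s) <= b s) -> ex_series b ->
  vnorm (vseries f) <=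
  vnorm (fun l => \big[Rplus/0]_(s < S) f s l) + Series (fun t => b (S + t)%nat).
Proof.
move=> Hf Hb.
have -> : vseries f = vadd (fun l => \big[Rplus/0]_(s < S) f s l) (vseries (fun t => f (S + t)%nat)).
  apply functional_extensionality => l; rewrite /vadd /vseries.
  exact: Series_split (vseries_ex Hf Hb l).
apply: Rle_trans (vnorm_add _ _) _; apply Rplus_le_compat_l.
apply: vseries_bound => [t|]; [exact: Hf | exact: ex_series_shift].
Qed.

End VectorSeries.

Lemma mv_vseries n p (A : mat n p) (f : nat -> vec p) :
  (forall k, ex_series (fun s => f s k)) -> mv A (vseries f) = vseries (fun s => mv A (f s)).
Proof.
move=> Hf; apply functional_extensionality => i; rewrite /mv /vseries.
have H : forall k : 'I_p, ex_series (fun s => A i k * f s k).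
  by move=> k; apply: ex_series_scal_l.
rewrite (proj2 (Series_bigsum H)); apply eq_bigr => k _; by rewrite Series_scal_l.
Qed.

(** * Series of C^r maps *)

Definition cmax m (k : nat) (xi : nat -> vec m) : R := \big[Rmax/0]_(i < k) vnorm (xi i).

Lemma cmax_ge0 m k (xi : nat -> vec m) : 0 <= cmax k xi.
Proof. exact: big_Rmax_ge0. Qed.

Lemma cmax_ge m k (xi : nat -> vec m) i : (i < k)%nat -> vnorm (xi i) <= cmax k xi.
Proof. move=> Hi; exact: (big_Rmax_ge (fun i : 'I_k => vnorm (xi i)) (Ordinal Hi)). Qed.

(* Weierstrass test for C^r maps: a series of C^r maps whose derivatives
   (and first-order remainders) are dominated by a summable sequence b is
   C^r, with the term-wise derivatives. *)
Section CrSeries.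
Variables (m d : nat) (rho : R) (r : nat) (Qs : nat -> vec m -> vec d)
  (DQs : nat -> nat -> vec m -> mlmap m d) (b : nat -> R).
Hypotheses (HC : forall s, Cr_family rho r (Qs s) (DQs s)) (Hb : ex_series b)
  (Hbd : forall s k x (xi : nat -> vec m) c, (k <= r)%nat -> inD rho x -> 0 <= c ->
     (forall i, (i < k)%nat -> vnorm (xi i) <= c) -> vnorm (DQs s k x xi) <= c ^ k * b s)
  (Hrem : forall s k x y (xi : nat -> vec m), (k < r)%nat -> inD rho x -> inD rho y ->
     (forall i, (i < k)%nat -> vnorm (xi i) <= 1) ->
     vnorm (vsub (vsub (DQs s k y xi) (DQs s k x xi)) (DQs s k.+1 x (scons (vsub y x) xi)))
       <= 2 * b s * vnorm (vsub y x)).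

Lemma Cr_series_ex k x (xi : nat -> vec m) : (k <= r)%nat -> inD rho x ->
  forall l, ex_series (fun s => DQs s k x xi l).
Proof.
move=> Hk Hx; apply: (vseries_ex (b := fun s => cmax k xi ^ k * b s)).
- move=> s; apply Hbd => //; [exact: cmax_ge0 | move=> i Hi; exact: cmax_ge].
- exact: ex_series_scal_l.
Qed.

(* First-order remainder of the sum: the head of the series is handled by
   Cr_sum, its tail is small by summability of b. *)
Lemma Cr_series_diff k x eps : (k < r)%nat -> inD rho x -> 0 < eps ->
  exists delta, 0 < delta /\ forall y, inD rho y -> vnorm (vsub y x) < delta ->
    forall xi : nat -> vec m, (forall i, (i < k)%nat -> vnorm (xi i) <= 1) ->
    vnorm (vsub (vsub (vseries (fun s => DQs s k y xi)) (vseries (fun s => DQs s k x xi)))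
                (vseries (fun s => DQs s k.+1 x (scons (vsub y x) xi))))
      <= eps * vnorm (vsub y x).
Proof.
move=> Hk Hx Heps.
have [S HS] := tail_small Hb (e := eps / 4) ltac:(lra).
have [_ [_ [C3 _]]] := Cr_sum (n := S) (Ps := Qs) (DPs := DQs) (fun j _ => HC j).
have [dl [Hdl HF]] := C3 k x Hk Hx (eps / 2) ltac:(lra).
exists dl; split => // y Hy Hyx xi Hxi.
have E1 := Cr_series_ex xi (ltnW Hk) Hy.
have E2 := Cr_series_ex xi (ltnW Hk) Hx.
have E3 := Cr_series_ex (scons (vsub y x) xi) Hk Hx.
have E12 : forall l, ex_series (fun s => vsub (DQs s k y xi) (DQs s k x xi) l).
  by move=> l; apply: ex_series_minus.
rewrite -(vseries_sub E1 E2) -(vseries_sub E12 E3).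
have Hyx0 := vnorm_ge0 (vsub y x).
apply: Rle_trans (vseries_head_tail S (b := fun s => 2 * vnorm (vsub y x) * b s) _ _) _.
- move=> s; apply: Rle_trans (Hrem _ Hk Hx Hy Hxi) _; apply Req_le; ring.
- exact: ex_series_scal_l.
have Hhead := HF y Hy Hyx xi Hxi; rewrite rem_sum in Hhead.
have Htail : Series (fun t => 2 * vnorm (vsub y x) * b (S + t)%nat) <=
             2 * vnorm (vsub y x) * (eps / 4).
  rewrite (Series_scal_l _ (fun t => b (S + t)%nat)).
  apply Rmult_le_compat_l; [lra | exact: Rle_trans (Rle_abs _) (Rlt_le _ _ HS)].
apply: Rle_trans (Rplus_le_compat _ _ _ _ Hhead Htail) _; lra.
Qed.

(* Uniform continuity of the r-th derivative of the sum, by the same splitting. *)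
Lemma Cr_series_cont x eps : inD rho x -> 0 < eps ->
  exists delta, 0 < delta /\ forall y, inD rho y -> vnorm (vsub y x) < delta ->
    forall xi : nat -> vec m, (forall i, (i < r)%nat -> vnorm (xi i) <= 1) ->
    vnorm (vsub (vseries (fun s => DQs s r y xi)) (vseries (fun s => DQs s r x xi))) <= eps.
Proof.
move=> Hx Heps.
have [S HS] := tail_small Hb (e := eps / 4) ltac:(lra).
have [_ [_ [_ C4]]] := Cr_sum (n := S) (Ps := Qs) (DPs := DQs) (fun j _ => HC j).
have [dl [Hdl HF]] := C4 x Hx (eps / 2) ltac:(lra).
exists dl; split => // y Hy Hyx xi Hxi.
have E1 := Cr_series_ex xi (leqnn r) Hy.
have E2 := Cr_series_ex xi (leqnn r) Hx.
rewrite -(vseries_sub E1 E2).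
apply: Rle_trans (vseries_head_tail S (b := fun s => 2 * b s) _ _) _.
- move=> s; apply: Rle_trans (vnorm_sub (DQs s r y xi) (DQs s r x xi)) _.
  have := @Hbd s r y xi 1 (leqnn r) Hy ltac:(lra) Hxi.
  have := @Hbd s r x xi 1 (leqnn r) Hx ltac:(lra) Hxi.
  rewrite pow1; lra.
- exact: ex_series_scal_l.
have Hhead := HF y Hy Hyx xi Hxi; rewrite sub_sum in Hhead.
have Htail : Series (fun t => 2 * b (S + t)%nat) <= 2 * (eps / 4).
  rewrite (Series_scal_l _ (fun t => b (S + t)%nat)).
  apply Rmult_le_compat_l; [lra | exact: Rle_trans (Rle_abs _) (Rlt_le _ _ HS)].
apply: Rle_trans (Rplus_le_compat _ _ _ _ Hhead Htail) _; lra.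
Qed.

Lemma Cr_series :
  Cr_family rho r (fun x => vseries (fun s => Qs s x))
    (fun k x xi => vseries (fun s => DQs s k x xi)).
Proof.
split; [|split; [|split]].
- move=> x Hx xi; apply vseries_ext => s; case: (HC s) => C1 _; exact: C1.
- move=> k x Hk Hx; split.
  + move=> xi xi' H; apply vseries_ext => s; case: (HC s) => _ [C2 _].
    exact: (ml_ext (C2 k x Hk Hx)).
  + move=> xi i a b' u v Hi.
    rewrite -vseries_lin; try exact: Cr_series_ex.
    apply vseries_ext => s; case: (HC s) => _ [C2 _].
    by case: (C2 k x Hk Hx) => _ ->.
- move=> k x Hk Hx eps Heps; exact: Cr_series_diff.
- move=> x Hx eps Heps; exact: Cr_series_cont.
Qed.

End CrSeries.

(** * Powers of Lambda *)

Section LambdaPowers.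
Variables (m : nat) (rho : R) (r : nat) (Lam : mat m m) (mu : R).
Hypotheses (Hlam : opnorm Lam ^ r <= mu) (Hmu : mu < 1).

Definition Lpow s : mat m m := mpow Lam s.
Definition lam := opnorm Lam.

Lemma lam_ge0 : 0 <= lam. Proof. exact: opnorm_ge0. Qed.

Lemma mu_ge0 : 0 <= mu.
Proof. apply: Rle_trans Hlam; apply pow_le, lam_ge0. Qed.

Lemma lam_le1 : lam <= 1.
Proof.
apply Rnot_lt_le => H.
have : 1 <= lam ^ r by apply pow_R1_Rle; lra.
rewrite /lam in H *; lra.
Qed.

Lemma lampow_ge0 s : 0 <= lam ^ s.
Proof. apply pow_le, lam_ge0. Qed.

Lemma Lpow_bound s x : vnorm (mv (Lpow s) x) <= lam ^ s * vnorm x.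
Proof.
elim: s => [|s IH]; first by rewrite /Lpow /= mv_mid; lra.
rewrite /Lpow /= mv_mmul; apply: Rle_trans (mv_opnorm _ _) _.
rewrite -/(Lpow s) -/lam /=.
have : lam * vnorm (mv (Lpow s) x) <= lam * (lam ^ s * vnorm x) by apply Rmult_le_compat_l => //; exact: lam_ge0.
lra.
Qed.

Lemma Lpow_contr s x : vnorm (mv (Lpow s) x) <= vnorm x.
Proof.
apply: Rle_trans (Lpow_bound s x) _.
have : lam ^ s <= 1 by rewrite -(pow1 s); apply pow_incr; split; [exact: lam_ge0 | exact: lam_le1].
have := vnorm_ge0 x; have := lampow_ge0 s; nra.
Qed.

Lemma Lpow_D s x : inD rho x -> inD rho (mv (Lpow s) x).
Proof. rewrite /inD => H; exact: Rle_trans (Lpow_contr s x) H. Qed.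

Lemma lam_mu s : (lam ^ s) ^ r <= mu ^ s.
Proof.
rewrite -pow_mult Nat.mul_comm pow_mult; apply pow_incr.
split; [apply pow_le, lam_ge0 | exact Hlam].
Qed.

Lemma Lpow_add a b x : mv (Lpow (a + b)) x = mv (Lpow a) (mv (Lpow b) x).
Proof. by rewrite /Lpow mpow_add. Qed.

Lemma Lpow0 x : mv (Lpow 0) x = x.
Proof. by rewrite /Lpow /= mv_mid. Qed.

End LambdaPowers.

(** * The coefficients of the inverse series *)

Section Coefficients.
Variables (d N : nat) (B : nat -> mat d d) (B0inv : mat d d) (mu : R).
Hypotheses (Hmu0 : 0 <= mu) (HBr : mmul (B 0%nat) B0inv = mid)
  (Hq0 : \big[Rplus/0]_(1 <= i < N.+1) (mu ^ i * opnorm (mmul B0inv (B i))) < 1).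

Definition Ahat j := mmul B0inv (B j).

(* Ctab n k = C_k for k <= n, computed by the recursion
   C_0 = B_0^{-1},  C_{n+1} = - sum_{j < N, j <= n} A_{j+1} C_{n-j}. *)
Fixpoint Ctab (n : nat) : nat -> mat d d :=
  match n with
  | O => fun _ => B0inv
  | S n' => fun k => if (k <= n')%nat then Ctab n' k else
      (fun i l => - \big[Rplus/0]_(j < N)
         (if (j <= n')%nat then mmul (Ahat j.+1) (Ctab n' (n' - j)) i l else 0))
  end.

Definition Cinv n := Ctab n n.

Definition wA (j : nat) := opnorm (Ahat j.+1) * mu ^ j.+1.
Definition qA := \big[Rplus/0]_(j < N) wA j.
Definition wC s := opnorm (Cinv s) * mu ^ s.

Lemma qA_lt1 : qA < 1.
Proof.
apply: Rle_lt_trans Hq0; apply Req_le.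
rewrite /qA big_add1 /= big_mkord; apply eq_bigr => j _; rewrite /wA /Ahat /=; ring.
Qed.

Lemma wA_ge0 j : 0 <= wA j.
Proof. apply Rmult_le_pos; [apply opnorm_ge0 | exact: pow_le]. Qed.

Lemma qA_ge0 : 0 <= qA.
Proof. apply sumR_ge0 => j _; exact: wA_ge0. Qed.

Lemma wC_ge0 s : 0 <= wC s.
Proof. apply Rmult_le_pos; [apply opnorm_ge0 | exact: pow_le]. Qed.

Lemma Ctab_ok n k : (k <= n)%nat -> Ctab n k = Cinv k.
Proof.
elim: n k => [|n IH] k Hk.
- by have -> : k = 0%nat by apply/eqP; rewrite -leqn0.
- rewrite /=; case: (boolP (k <= n)%nat) => Hkn; first exact: IH.
  have -> : k = n.+1 by apply/eqP; rewrite eqn_leq Hk ltnNge Hkn.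
  by rewrite /Cinv /= ltnn.
Qed.

Lemma Cinv_rec n : Cinv n.+1 =
  (fun i l => - \big[Rplus/0]_(j < N)
     (if (j <= n)%nat then mmul (Ahat j.+1) (Cinv (n - j)) i l else 0)).
Proof.
rewrite {1}/Cinv /= ltnn.
apply functional_extensionality => i; apply functional_extensionality => l.
f_equal; apply eq_bigr => j _; case: (boolP (j <= n)%nat) => Hj //.
rewrite Ctab_ok //; exact: leq_subr.
Qed.

Lemma Cinv_rec_mv n v : mv (Cinv n.+1) v =
  (fun i => - \big[Rplus/0]_(j < N)
     (if (j <= n)%nat then mv (Ahat j.+1) (mv (Cinv (n - j)) v) i else 0)).
Proof.
rewrite Cinv_rec; apply functional_extensionality => i.
transitivity (- \big[Rplus/0]_(j < N)
   (if (j <= n)%nat then mv (mmul (Ahat j.+1) (Cinv (n - j))) v i else 0)).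
- rewrite {1}/mv.
  under eq_bigr => k _ do rewrite Ropp_mult_distr_l_reverse big_distrl /=.
  rewrite sumR_opp exchange_big /=; f_equal; apply eq_bigr => j _.
  case: (j <= n)%nat => //; rewrite big1 // => k _; ring.
- f_equal; apply eq_bigr => j _; case: (j <= n)%nat => //; by rewrite mv_mmul.
Qed.

Lemma Ahat_B0 j w : mv (B 0%nat) (mv (Ahat j) w) = mv (B j) w.
Proof. by rewrite /Ahat !mv_mmul -mv_mmul HBr mv_mid. Qed.

(* The C_s invert sum_j B_j z^j: the coefficient of z^n in the Cauchy
   product (sum_j B_j z^j)(sum_s C_s z^s) is the identity for n = 0 and
   zero otherwise. *)
Lemma Cinv_right_inverse n v :
  (fun i => \big[Rplus/0]_(j < N.+1) (if (j <= n)%nat then mv (B j) (mv (Cinv (n - j)) v) i else 0))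
  = if n == 0%nat then v else vzero.
Proof.
apply functional_extensionality => i; rewrite big_ord_recl /=.
case: n => [|n] /=.
- rewrite subn0 /Cinv /= -mv_mmul HBr mv_mid big1; first ring.
  by move=> j _.
- have E1 : mv (B 0%nat) (mv (Cinv n.+1) v) i =
     - \big[Rplus/0]_(j < N) (if (j <= n)%nat then mv (B j.+1) (mv (Cinv (n - j)) v) i else 0).
    rewrite Cinv_rec_mv {1}/mv.
    under eq_bigr => k _ do rewrite Ropp_mult_distr_r_reverse big_distrr /=.
    rewrite sumR_opp exchange_big /=; f_equal; apply eq_bigr => j _.
    case: (j <= n)%nat; first by rewrite -Ahat_B0.
    rewrite big1 // => k _; ring.
  rewrite subn0 E1 /vzero.
  have E2 : forall j : 'I_N, (if (lift ord0 j <= n.+1)%nat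
        then mv (B (lift ord0 j)) (mv (Cinv (n.+1 - lift ord0 j)) v) i else 0)
     = (if (j <= n)%nat then mv (B j.+1) (mv (Cinv (n - j)) v) i else 0).
    by move=> j; rewrite /= /bump /= add1n ltnS subSS.
  rewrite (eq_bigr _ (fun j _ => E2 j)); ring.
Qed.

Lemma wC_rec n :
  wC n.+1 <= \big[Rplus/0]_(j < N) (if (j <= n)%nat then wA j * wC (n - j) else 0).
Proof.
set K := \big[Rplus/0]_(j < N)
  (if (j <= n)%nat then opnorm (Ahat j.+1) * opnorm (Cinv (n - j)) else 0).
have K0 : 0 <= K.
  apply sumR_ge0 => j _; case: (j <= n)%nat; last lra.
  apply Rmult_le_pos; apply opnorm_ge0.
have H : opnorm (Cinv n.+1) <= K.
  apply opnorm_le => // x; rewrite Cinv_rec_mv.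
  apply vnorm_le; first by apply Rmult_le_pos => //; apply vnorm_ge0.
  move=> i; rewrite Rabs_Ropp; apply: Rle_trans (sumR_abs _ _ _) _.
  rewrite /K big_distrl /=; apply sumR_le => j _.
  case: (j <= n)%nat; last by rewrite Rabs_R0; lra.
  apply: Rle_trans (vnorm_coord _ _) _; apply: Rle_trans (mv_opnorm _ _) _.
  rewrite Rmult_assoc; apply Rmult_le_compat_l; [apply opnorm_ge0 | apply mv_opnorm].
rewrite /wC; apply: Rle_trans (Rmult_le_compat_r _ _ _ (pow_le _ _ Hmu0) H) _.
rewrite /K big_distrl; apply Req_le, eq_bigr => j _.
case: (boolP (j <= n)%nat) => Hj; last by rewrite /=; ring.
rewrite /wA /wC.
have -> : (n.+1 = j.+1 + (n - j))%nat by rewrite addSn subnKC.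
rewrite pow_add /=; ring.
Qed.

Lemma sum_delayed j n : \big[Rplus/0]_(k < n) (if (j <= k)%nat then wC (k - j) else 0) =
  \big[Rplus/0]_(i < n - j) wC i.
Proof.
elim: n => [|n IH]; first by rewrite sub0n !big_ord0.
rewrite (sum_recr (fun k => if (j <= k)%nat then wC (k - j) else 0)) IH.
case: (boolP (j <= n)%nat) => Hj; first by rewrite subSn // sum_recr.
have E1 : (n - j = 0)%nat by apply/eqP; rewrite subn_eq0; apply ltnW; rewrite ltnNge.
have E2 : (n.+1 - j = 0)%nat by apply/eqP; rewrite subn_eq0 ltnNge.
rewrite E1 E2; ring.
Qed.

(* Summing the renewal inequality: S_n <= wC 0 + qA S_n for the partial
   sums S_n, hence S_n <= wC 0 / (1 - qA). *)
Lemma wC_partial_bound n : \big[Rplus/0]_(i < n.+1) wC i <= wC 0%nat / (1 - qA).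
Proof.
have Hq := qA_lt1.
set S := \big[Rplus/0]_(i < n.+1) wC i.
suff : S <= wC 0%nat + qA * S.
  move=> H; apply (Rmult_le_reg_r (1 - qA)); first lra.
  have -> : wC 0%nat / (1 - qA) * (1 - qA) = wC 0%nat by field; lra.
  lra.
rewrite {1}/S sum_recl; apply Rplus_le_compat_l.
eapply Rle_trans.
  apply: (@sumR_le _ _ _ _ (fun k : 'I_n =>
     \big[Rplus/0]_(j < N) (if (j <= k)%nat then wA j * wC (k - j) else 0))).
  move=> k _; exact: wC_rec.
rewrite exchange_big /= /qA big_distrl /=; apply sumR_le => j _.
have -> : \big[Rplus/0]_(i < n) (if (j <= i)%nat then wA j * wC (i - j) else 0) =
   wA j * \big[Rplus/0]_(i < n) (if (j <= i)%nat then wC (i - j) else 0).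
  rewrite big_distrr /=; apply eq_bigr => k _; case: (j <= k)%nat => //; ring.
rewrite sum_delayed; apply Rmult_le_compat_l; first exact: wA_ge0.
apply sumR_prefix_le; first exact: wC_ge0.
exact: leq_trans (leq_subr _ _) (leqnSn _).
Qed.

Lemma wC_summable : ex_series wC.
Proof.
apply: (ex_series_bounded (M := wC 0%nat / (1 - qA))); [exact: wC_ge0 | exact: wC_partial_bound].
Qed.

End Coefficients.

(** * The norm of H_r *)

Section HNorm.
Variables (m d : nat) (rho : R) (r : nat).
Hypothesis rho0 : 0 < rho.

Lemma derivs_fam (P : vec m -> vec d) DP :
  Cr_family rho r P DP -> Cr_family rho r P (derivs rho r P).
Proof. move=> H; rewrite /derivs; apply epsilon_spec; by exists DP. Qed.

Lemma Hnorm_lub (P : vec m -> vec d) DP : Cr_family rho r P DP ->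
  is_lub (fun t => exists x, inD rho x /\ t = mlnorm r (derivs rho r P r x)) (Hnorm rho r P).
Proof.
move=> HC; have HD := derivs_fam HC.
have [H [H0 HH]] := Cr_bounded (Rlt_le _ _ rho0) HD.
have Hz : inD rho (@vzero m) by rewrite /inD vnorm_zero; lra.
apply: (Rsup_lub (M := H) (t0 := mlnorm r (derivs rho r P r vzero))).
- move=> t [x [Hx ->]]; case: HD => _ [C2 _].
  by apply mlnorm_le => //; [apply C2 | apply HH].
- by exists vzero.
Qed.

(* ||P||'_r bounds D^r P for any derivative family of P (by uniqueness). *)
Lemma Hnorm_ub (P : vec m -> vec d) DP z (xi : nat -> vec m) : Cr_family rho r P DP ->
  inD rho z -> (forall i, (i < r)%nat -> vnorm (xi i) <= 1) -> vnorm (DP r z xi) <= Hnorm rho r P.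
Proof.
move=> HC Hz Hxi; have HD := derivs_fam HC.
rewrite (Cr_unique rho0 HC HD (leqnn r) Hz Hxi).
case: (HD) => _ [C2 _].
apply: Rle_trans (mlnorm_ub (C2 r z (leqnn r) Hz) Hxi) _.
case: (Hnorm_lub HC) => Hub _; apply Hub; by exists z.
Qed.

Lemma Hnorm_ge0 (P : vec m -> vec d) DP : Cr_family rho r P DP -> 0 <= Hnorm rho r P.
Proof.
move=> HC; have HD := derivs_fam HC.
have Hz : inD rho (@vzero m) by rewrite /inD vnorm_zero; lra.
case: (Hnorm_lub HC) => Hub _.
apply: Rle_trans (Hub _ (ex_intro _ vzero (conj Hz (erefl _)))).
case: HD => _ [C2 _]; apply mlnorm_ge0; exact: C2.
Qed.

Lemma Hnorm_le (P : vec m -> vec d) DP C : Cr_family rho r P DP -> 0 <= C ->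
  (forall z, inD rho z -> UB r (DP r z) C) -> Hnorm rho r P <= C.
Proof.
move=> HC C0 HU; have HD := derivs_fam HC.
case: (Hnorm_lub HC) => _ Hl; apply Hl => t [x [Hx ->]].
case: (HD) => _ [C2 _].
apply mlnorm_le => //; first exact: C2.
move=> xi Hxi; rewrite -(Cr_unique rho0 HC HD (leqnn r) Hx Hxi); exact: HU.
Qed.

Lemma inH_family (P : vec m -> vec d) : inH rho r P ->
  exists DP, [/\ Cr_family rho r P DP, (forall i, (i < r)%nat -> forall xi, DP i vzero xi = vzero),
    0 <= Hnorm rho r P & forall z, inD rho z -> UB r (DP r z) (Hnorm rho r P)].
Proof.
move=> [DP [HP HP0]]; exists DP; split => //; first exact: Hnorm_ge0 HP.
move=> z Hz xi Hxi; exact: Hnorm_ub HP Hz Hxi.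
Qed.

End HNorm.

(** * The operators L and M *)

Section Operators.
Variables (m d : nat) (rho : R) (r N : nat) (B : nat -> mat d d) (B0inv : mat d d)
  (Lam : mat m m) (mu : R).
Hypotheses (rho0 : 0 < rho) (HBl : mmul B0inv (B 0%nat) = mid)
  (HBr : mmul (B 0%nat) B0inv = mid) (Hlam : opnorm Lam ^ r <= mu) (Hmu : mu < 1)
  (Hq0 : \big[Rplus/0]_(1 <= i < N.+1) (mu ^ i * opnorm (mmul B0inv (B i))) < 1).

Local Notation Ls := (Lpow Lam).
Local Notation Cs := (Cinv N B B0inv).
Local Notation wCs := (wC N B B0inv mu).

Definition map_dirs s (xi : nat -> vec m) : nat -> vec m := fun i => mv (Ls s) (xi i).

Definition Mop (P : vec m -> vec d) (x : vec m) : vec d :=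
  vseries (fun s => mv (Cs s) (P (mv (Ls s) x))).
Definition DMop (DP : nat -> vec m -> mlmap m d) : nat -> vec m -> mlmap m d :=
  fun k x xi => vseries (fun s => mv (Cs s) (DP k (mv (Ls s) x) (map_dirs s xi))).

Definition DLop (DP : nat -> vec m -> mlmap m d) : nat -> vec m -> mlmap m d :=
  fun k x xi l => \big[Rplus/0]_(j < N.+1) mv (B j) (DP k (mv (Ls j) x) (map_dirs j xi)) l.

Lemma wCs_summable : ex_series wCs.
Proof. exact: wC_summable (mu_ge0 Hlam) Hq0. Qed.

(* Arithmetic behind the decay of the terms of M P: with L = ||Lambda||^s,
   so that L^r <= mu^s, and a = ||Lambda^s z|| <= L rho, the Taylor bound
   (L c)^k H a^(r-k) is at most c^k H (rho+1)^r mu^s. *)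
Lemma flat_power_bound (L c H a : R) (k : nat) s :
  0 <= L -> L ^ r <= mu ^ s -> 0 <= c -> 0 <= H -> 0 <= a -> a <= L * rho -> (k <= r)%nat ->
  (L * c) ^ k * (H * a ^ (r - k)) <= c ^ k * (H * (rho + 1) ^ r * mu ^ s).
Proof.
move=> L0 HL c0 H0 a0 Ha Hk.
have E : (L * c) ^ k * (H * (L * rho) ^ (r - k)) = c ^ k * H * rho ^ (r - k) * L ^ r.
  rewrite !Rpow_mult_distr.
  have -> : L ^ r = L ^ k * L ^ (r - k).
    by rewrite -pow_add; f_equal; rewrite -/(addn k (r - k)) subnKC.
  ring.
have H1 : a ^ (r - k) <= (L * rho) ^ (r - k) by apply pow_incr.
have H2 : rho ^ (r - k) <= (rho + 1) ^ r.
  apply: Rle_trans (pow_incr rho (rho + 1) (r - k) ltac:(lra)) _.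
  apply Rle_pow; first lra. apply/leP; exact: leq_subr.
have Hck : 0 <= c ^ k by apply pow_le.
have Hrk : 0 <= rho ^ (r - k) by apply pow_le; lra.
have HLr : 0 <= L ^ r by apply pow_le.
have HLk : 0 <= (L * c) ^ k by apply pow_le; nra.
apply Rle_trans with ((L * c) ^ k * (H * (L * rho) ^ (r - k))).
  apply Rmult_le_compat_l => //; exact: Rmult_le_compat_l.
rewrite E.
have : c ^ k * H * rho ^ (r - k) * L ^ r <= c ^ k * H * (rho + 1) ^ r * L ^ r.
  apply Rmult_le_compat_r => //; apply Rmult_le_compat_l => //; nra.
have : c ^ k * H * (rho + 1) ^ r * L ^ r <= c ^ k * H * (rho + 1) ^ r * mu ^ s.
  apply Rmult_le_compat_l => //; apply Rmult_le_pos; [nra | apply pow_le; lra].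
lra.
Qed.

Section FlatTerms.
Variables (P : vec m -> vec d) (DP : nat -> vec m -> mlmap m d) (H : R).
Hypotheses (HP : Cr_family rho r P DP)
  (HP0 : forall i, (i < r)%nat -> forall xi, DP i vzero xi = vzero)
  (Hh : 0 <= H) (Hr : forall z, inD rho z -> UB r (DP r z) H).

Definition Kflat := H * (rho + 1) ^ r.

Lemma flat_deriv_bound s k z (xi : nat -> vec m) c : (k <= r)%nat -> inD rho z -> 0 <= c ->
  (forall i, (i < k)%nat -> vnorm (xi i) <= c) ->
  vnorm (DP k (mv (Ls s) z) (map_dirs s xi)) <= c ^ k * (Kflat * mu ^ s).
Proof.
move=> Hk Hz c0 Hxi.
have HzD := Lpow_D Hlam Hmu s Hz.
have [_ [C2 _]] := HP.
have L0 := lampow_ge0 Lam s.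
have Htay := Cr_taylor HP HP0 Hh Hr (subnKC Hk) HzD.
have Hb : vnorm (DP k (mv (Ls s) z) (map_dirs s xi)) <=
    (lam Lam ^ s * c) ^ k * (H * vnorm (mv (Ls s) z) ^ (r - k)).
  apply: (UB_scale (C2 k _ Hk HzD) Htay); first nra.
  move=> i Hi; rewrite /map_dirs; apply: Rle_trans (Lpow_bound _ _ _) _.
  apply Rmult_le_compat_l => //; exact: Hxi.
apply: Rle_trans Hb _.
apply: (flat_power_bound L0 (lam_mu Hlam s) c0 Hh (vnorm_ge0 _) _ Hk).
apply: Rle_trans (Lpow_bound _ _ _) _; exact: Rmult_le_compat_l.
Qed.

Lemma term_bound s k x (xi : nat -> vec m) c : (k <= r)%nat -> inD rho x -> 0 <= c ->
  (forall i, (i < k)%nat -> vnorm (xi i) <= c) ->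
  vnorm (mv (Cs s) (DP k (mv (Ls s) x) (map_dirs s xi))) <= c ^ k * (Kflat * wCs s).
Proof.
move=> Hk Hx c0 Hxi; apply: Rle_trans (mv_opnorm _ _) _.
apply: Rle_trans (Rmult_le_compat_l _ _ _ (opnorm_ge0 _) (flat_deriv_bound s Hk Hx c0 Hxi)) _.
apply Req_le; rewrite /wC; ring.
Qed.

Lemma deriv_step_bound s k z w (xi : nat -> vec m) : (k < r)%nat -> inD rho z ->
  (forall i, (i < k)%nat -> vnorm (xi i) <= 1) ->
  vnorm (DP k.+1 (mv (Ls s) z) (map_dirs s (scons w xi))) <= vnorm w * (Kflat * mu ^ s).
Proof.
move=> Hk Hz Hxi; have [_ [C2 _]] := HP.
apply: (UB_slot0 (T := fun eta => DP k.+1 (mv (Ls s) z) (map_dirs s eta)) w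
          (ml_map (Ls s) (C2 k.+1 _ Hk (Lpow_D Hlam Hmu s Hz))) _ Hxi).
move=> eta Heta; have := flat_deriv_bound s Hk Hz (c := 1) ltac:(lra) Heta; rewrite pow1; lra.
Qed.

Lemma term_rem_bound s k x y (xi : nat -> vec m) : (k < r)%nat -> inD rho x -> inD rho y ->
  (forall i, (i < k)%nat -> vnorm (xi i) <= 1) ->
  vnorm (vsub (vsub (mv (Cs s) (DP k (mv (Ls s) y) (map_dirs s xi)))
                    (mv (Cs s) (DP k (mv (Ls s) x) (map_dirs s xi))))
              (mv (Cs s) (DP k.+1 (mv (Ls s) x) (map_dirs s (scons (vsub y x) xi))))) <=
  2 * (Kflat * wCs s) * vnorm (vsub y x).
Proof.
move=> Hk Hx Hy Hxi.
have HxD := Lpow_D Hlam Hmu s Hx; have HyD := Lpow_D Hlam Hmu s Hy.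
have Heta : forall i, (i < k)%nat -> vnorm (map_dirs s xi i) <= 1.
  move=> i Hi; rewrite /map_dirs; apply: Rle_trans (Lpow_contr Hlam Hmu _ _) _; exact: Hxi.
have HK : forall t, 0 <= t <= 1 ->
    vnorm (DP k.+1 (seg (mv (Ls s) x) (mv (Ls s) y) t)
             (scons (vsub (mv (Ls s) y) (mv (Ls s) x)) (map_dirs s xi)))
    <= vnorm (vsub y x) * (Kflat * mu ^ s).
  move=> t Ht; rewrite -mv_seg -mv_sub /map_dirs -mapA_scons.
  exact: (deriv_step_bound s (vsub y x) Hk (inD_seg Hx Hy Ht) Hxi).
have H2 := Cr_rem HP Hk HyD HxD Heta HK.
rewrite -!(mv_sub (Cs s)); apply: Rle_trans (mv_opnorm _ _) _.
rewrite /map_dirs mapA_scons (mv_sub (Ls s)) -/(map_dirs s xi).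
apply: Rle_trans (Rmult_le_compat_l _ _ _ (opnorm_ge0 _) H2) _.
apply Req_le; rewrite /wC; ring.
Qed.

Lemma M_family : Cr_family rho r (Mop P) (DMop DP).
Proof.
apply: (Cr_series (Qs := fun s x => mv (Cs s) (P (mv (Ls s) x)))
                  (DQs := fun s k x xi => mv (Cs s) (DP k (mv (Ls s) x) (map_dirs s xi)))
                  (b := fun s => Kflat * wCs s)).
- move=> s; apply: Cr_comp HP _ => x; exact: Lpow_contr Hlam Hmu _ _.
- apply: ex_series_scal_l; exact: wCs_summable.
- move=> s k x xi c Hk Hx c0 Hxi; exact: term_bound.
- move=> s k x y xi Hk Hx Hy Hxi; exact: term_rem_bound.
Qed.

Lemma M_zero i : (i < r)%nat -> forall xi, DMop DP i vzero xi = vzero.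
Proof.
move=> Hi xi; apply functional_extensionality => l.
rewrite /DMop /vseries (Series_ext _ (fun _ => 0)) ?Series_zero // => s.
by rewrite mv_zero HP0 // mv_zero.
Qed.

Lemma M_rbound z (xi : nat -> vec m) : inD rho z ->
  (forall i, (i < r)%nat -> vnorm (xi i) <= 1) -> vnorm (DMop DP r z xi) <= Kflat * Series wCs.
Proof.
move=> Hz Hxi; rewrite /DMop -Series_scal_l.
apply vseries_bound; last by apply: ex_series_scal_l; exact: wCs_summable.
move=> s; have := term_bound s (leqnn r) Hz (c := 1) ltac:(lra) Hxi.
by rewrite pow1 Rmult_1_l.
Qed.

Lemma M_term_bound x s : inD rho x -> vnorm (mv (Cs s) (P (mv (Ls s) x))) <= Kflat * wCs s.
Proof.
move=> Hx.
have := term_bound s (k := 0) (xi := fun _ => vzero) (leq0n r) Hx (c := 1) ltac:(lra) (fun i Hi => ltac:(done)).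
case: HP => C1 _; rewrite C1; last exact: (Lpow_D Hlam Hmu s Hx).
by rewrite /= Rmult_1_l.
Qed.

Lemma M_ex x : inD rho x -> forall l, ex_series (fun s => mv (Cs s) (P (mv (Ls s) x)) l).
Proof.
move=> Hx; apply: (vseries_ex (b := fun s => Kflat * wCs s)).
- move=> s; exact: M_term_bound.
- apply: ex_series_scal_l; exact: wCs_summable.
Qed.

(* L M P = P on D: a Cauchy product computation with the C_s. *)
Lemma LM_id x : inD rho x -> Lop N B Lam (Mop P) x = P x.
Proof.
move=> Hx; apply functional_extensionality => l; rewrite /Lop.
set g := fun (j : nat) s => mv (B j) (mv (Cs s) (P (mv (Ls s) (mv (Ls j) x)))) l.
have Hg : forall j, ex_series (g j).
  move=> j; apply: (ex_series_cmp (b := fun s => opnorm (B j) * (Kflat * wCs s))).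
  - move=> s; rewrite /g; apply: Rle_trans (vnorm_coord _ l) _.
    apply: Rle_trans (mv_opnorm _ _) _; apply Rmult_le_compat_l; first exact: opnorm_ge0.
    exact: (M_term_bound s (Lpow_D Hlam Hmu j Hx)).
  - apply: ex_series_scal_l; apply: ex_series_scal_l; exact: wCs_summable.
(* the j-th term of L M P is the series of g j, delayed by j *)
have E1 : forall j : 'I_N.+1, mv (B j) (Mop P (mv (Ls j) x)) l =
    Series (fun n => if (j <= n)%nat then g j (n - j)%nat else 0).
  move=> j; rewrite Series_shiftj // /Mop mv_vseries //.
  exact: (M_ex (Lpow_D Hlam Hmu j Hx)).
rewrite (eq_bigr _ (fun j _ => E1 j)).
have Hex : forall j : 'I_N.+1, ex_series (fun n => if (j <= n)%nat then g j (n - j)%nat else 0).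
  move=> j; exact: ex_series_shiftj.
rewrite -(proj2 (Series_bigsum Hex)).
have E2 : forall n, \big[Rplus/0]_(j < N.+1) (if (j <= n)%nat then g j (n - j)%nat else 0) =
    (if n == 0%nat then P x l else 0).
  move=> n.
  have := f_equal (fun f => f l) (Cinv_right_inverse N HBr n (P (mv (Ls n) x))); rewrite /= => E.
  have E' : (if n == 0%nat then P (mv (Ls n) x) else vzero) l = (if n == 0%nat then P x l else 0).
    by case: (eqVneq n 0%nat) => [->|Hn] //=; rewrite Lpow0.
  rewrite -E' -E; apply eq_bigr => j _; rewrite /g.
  case: (boolP (j <= n)%nat) => Hj //; by rewrite -Lpow_add subnK.
rewrite (Series_ext _ _ E2); exact: Series_delta.
Qed.

End FlatTerms.

Lemma L_family (P : vec m -> vec d) DP :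
  Cr_family rho r P DP -> Cr_family rho r (Lop N B Lam P) (DLop DP).
Proof.
move=> HP.
have H := Cr_sum (n := N.+1) (Ps := fun j x => mv (B j) (P (mv (Ls j) x)))
   (DPs := fun j k x xi => mv (B j) (DP k (mv (Ls j) x) (map_dirs j xi)))
   (fun j _ => Cr_comp (B j) (A := Ls j) HP (Lpow_contr Hlam Hmu j)).
exact: (Cr_ext H).
Qed.

Lemma L_zero DP : (forall i, (i < r)%nat -> forall xi, DP i vzero xi = vzero) ->
  forall i, (i < r)%nat -> forall xi, DLop DP i vzero xi = vzero.
Proof.
move=> H0 i Hi xi; apply functional_extensionality => l; rewrite /DLop /vzero big1 // => j _.
by rewrite mv_zero H0 // mv_zero.
Qed.

Lemma Lop_sub (F G : vec m -> vec d) x :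
  Lop N B Lam (fun y => vsub (F y) (G y)) x = vsub (Lop N B Lam F x) (Lop N B Lam G x).
Proof.
apply functional_extensionality => l; rewrite /Lop /vsub /Rminus -sumR_opp -big_split /=.
apply eq_bigr => j _; rewrite mv_sub /vsub; ring.
Qed.

Lemma Lop_kernel_rec (F : vec m -> vec d) z : Lop N B Lam F z = vzero ->
  F z = (fun i => - \big[Rplus/0]_(j < N) mv (Ahat B B0inv j.+1) (F (mv (Ls j.+1) z)) i).
Proof.
move=> HL; have E := f_equal (mv B0inv) HL.
rewrite mv_zero /Lop mv_bigsum in E.
apply functional_extensionality => i.
have E' := f_equal (fun f => f i) E; rewrite /vzero /= in E'.
rewrite (sum_recl (fun j => mv B0inv (mv (B j) (F (mv (mpow Lam j) z))) i)) in E'.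
rewrite -mv_mmul HBl mv_mid in E'.
change (mpow Lam 0) with (@mid m) in E'; rewrite mv_mid in E'.
have E3 : \big[Rplus/0]_(j < N) mv B0inv (mv (B j.+1) (F (mv (mpow Lam j.+1) z))) i =
          \big[Rplus/0]_(j < N) mv (Ahat B B0inv j.+1) (F (mv (Ls j.+1) z)) i.
  by apply eq_bigr => j _; rewrite /Ahat mv_mmul.
lra.
Qed.

(* Iterating the recursion: each step gains a factor qA < 1. *)
Lemma kernel_decay (F : vec m -> vec d) K :
  (forall z, inD rho z -> Lop N B Lam F z = vzero) -> 0 <= K ->
  (forall z, inD rho z -> vnorm (F z) <= K * vnorm z ^ r) ->
  forall n z, inD rho z -> vnorm (F z) <= qA N B B0inv mu ^ n * (K * vnorm z ^ r).
Proof.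
move=> HL K0 Htay; set q := qA N B B0inv mu.
have q0 : 0 <= q by exact: qA_ge0 (mu_ge0 Hlam).
elim=> [|n IH] z Hz; first by rewrite /= Rmult_1_l; exact: Htay.
have Hzr : 0 <= vnorm z ^ r by apply pow_le, vnorm_ge0.
have Hqn : 0 <= q ^ n by apply pow_le.
rewrite (Lop_kernel_rec (HL z Hz)).
apply vnorm_le; first by apply Rmult_le_pos; [apply pow_le | apply Rmult_le_pos].
move=> i; rewrite Rabs_Ropp; apply: Rle_trans (sumR_abs _ _ _) _.
have -> : q ^ n.+1 * (K * vnorm z ^ r) =
    \big[Rplus/0]_(j < N) (wA B B0inv mu j * (q ^ n * (K * vnorm z ^ r))).
  by rewrite -big_distrl /= -/(qA N B B0inv mu) -/q /=; ring.
apply sumR_le => j _.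
apply: Rle_trans (vnorm_coord _ _) _; apply: Rle_trans (mv_opnorm _ _) _.
have Hpz : vnorm (mv (Ls j.+1) z) ^ r <= mu ^ j.+1 * vnorm z ^ r.
  apply: Rle_trans (Rmult_le_compat_r _ _ _ Hzr (lam_mu Hlam j.+1)).
  rewrite -Rpow_mult_distr; apply pow_incr; split; [apply vnorm_ge0 | apply Lpow_bound].
have H2 : vnorm (F (mv (Ls j.+1) z)) <= q ^ n * (K * (mu ^ j.+1 * vnorm z ^ r)).
  apply: Rle_trans (IH _ (Lpow_D Hlam Hmu j.+1 Hz)) _.
  apply Rmult_le_compat_l => //; exact: Rmult_le_compat_l.
apply: Rle_trans (Rmult_le_compat_l _ _ _ (opnorm_ge0 _) H2) _.
apply Req_le; rewrite /wA; ring.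
Qed.

Lemma Lop_injective (F : vec m -> vec d) DF : Cr_family rho r F DF ->
  (forall i, (i < r)%nat -> forall xi, DF i vzero xi = vzero) ->
  (forall z, inD rho z -> Lop N B Lam F z = vzero) -> forall z, inD rho z -> F z = vzero.
Proof.
move=> HF HF0 HL z Hz.
have [K [K0 Hr]] := Cr_bounded (Rlt_le _ _ rho0) HF.
have Htay : forall z, inD rho z -> vnorm (F z) <= K * vnorm z ^ r.
  move=> y Hy.
  have := Cr_taylor HF HF0 K0 Hr (add0n r) Hy (xi := fun _ => vzero) (fun i Hi => ltac:(done)).
  by case: HF => C1 _; rewrite C1.
have q1 : qA N B B0inv mu < 1 := qA_lt1 Hq0.
have q0 : 0 <= qA N B B0inv mu := qA_ge0 _ _ _ (mu_ge0 Hlam).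
apply vnorm_eq0.
have Kz : 0 <= K * vnorm z ^ r by apply Rmult_le_pos => //; apply pow_le, vnorm_ge0.
apply: (le_eps (c := K * vnorm z ^ r)) => // [|e He]; first exact: vnorm_ge0.
have [n Hn] := pow_lt_1_zero (qA N B B0inv mu) ltac:(rewrite Rabs_right; lra) e He.
have := Hn n (le_n n); rewrite Rabs_right; last by apply Rle_ge, pow_le.
move=> H1; apply: Rle_trans (kernel_decay HL K0 Htay n Hz) _.
apply Rmult_le_compat_r => //; lra.
Qed.

Lemma Lop_inH (P : vec m -> vec d) : inH rho r P -> inH rho r (Lop N B Lam P).
Proof.
move=> [DP [HP HP0]]; exists (DLop DP); split; [exact: L_family | exact: L_zero].
Qed.

Lemma Mop_inH (P : vec m -> vec d) : inH rho r P -> inH rho r (Mop P).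
Proof.
move=> HPH; have [DP [HP HP0 Hh Hr]] := inH_family rho0 HPH.
exists (DMop DP); split; [exact: (M_family HP HP0 Hh Hr) | exact: (M_zero HP0)].
Qed.

Lemma Mop_ext (P Q : vec m -> vec d) : (forall x, inD rho x -> P x = Q x) ->
  forall x, inD rho x -> Mop P x = Mop Q x.
Proof. move=> Heq x Hx; apply vseries_ext => s; rewrite Heq //; exact: (Lpow_D Hlam Hmu s Hx). Qed.

Lemma Mop_linear (P Q : vec m -> vec d) a b : inH rho r P -> inH rho r Q ->
  forall x, inD rho x -> Mop (fun y => vadd (vscale a (P y)) (vscale b (Q y))) x =
                         vadd (vscale a (Mop P x)) (vscale b (Mop Q x)).
Proof.
move=> HPH HQH x Hx.
have [DP [HP HP0 Hh Hr]] := inH_family rho0 HPH.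
have [DQ [HQ HQ0 Hh' Hr']] := inH_family rho0 HQH.
rewrite /Mop -vseries_lin; [|exact: (M_ex HP HP0 Hh Hr Hx) | exact: (M_ex HQ HQ0 Hh' Hr' Hx)].
apply vseries_ext => s; by rewrite mv_lin.
Qed.

Lemma Lop_Mop (P : vec m -> vec d) : inH rho r P ->
  forall x, inD rho x -> Lop N B Lam (Mop P) x = P x.
Proof.
move=> HPH x Hx; have [DP [HP HP0 Hh Hr]] := inH_family rho0 HPH.
exact: (LM_id HP HP0 Hh Hr Hx).
Qed.

(* M L = id on H_r: M L P - P is a flat C^r map killed by L. *)
Lemma Mop_Lop (P : vec m -> vec d) : inH rho r P ->
  forall x, inD rho x -> Mop (Lop N B Lam P) x = P x.
Proof.
move=> HPH x Hx.
have HLP := Lop_inH HPH.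
have [DP [HP HP0]] := HPH; have [DM [HM HM0]] := Mop_inH HLP.
have HF0 : forall i, (i < r)%nat -> forall xi, vsub (DM i vzero xi) (DP i vzero xi) = vzero.
  move=> i Hi xi; rewrite HM0 // HP0 //.
  apply functional_extensionality => l; rewrite /vsub /vzero; ring.
have HLF : forall z, inD rho z ->
    Lop N B Lam (fun y => vsub (Mop (Lop N B Lam P) y) (P y)) z = vzero.
  move=> z Hz; rewrite Lop_sub (Lop_Mop HLP Hz).
  apply functional_extensionality => l; rewrite /vsub /vzero; ring.
have := Lop_injective (Cr_sub HM HP) HF0 HLF Hx.
move=> E; apply functional_extensionality => l.
have := f_equal (fun f => f l) E; rewrite /vsub /vzero /=; lra.
Qed.

Lemma Mop_bounded : exists C, 0 <= C /\
  forall P : vec m -> vec d, inH rho r P -> Hnorm rho r (Mop P) <= C * Hnorm rho r P.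
Proof.
have HS : 0 <= Series wCs by apply Series_ge0; [exact: wC_ge0 (mu_ge0 Hlam) | exact: wCs_summable].
have Hr0 : 0 <= (rho + 1) ^ r by apply pow_le; lra.
exists ((rho + 1) ^ r * Series wCs); split; first exact: Rmult_le_pos.
move=> P HPH; have [DP [HP HP0 Hh Hr]] := inH_family rho0 HPH.
apply: (Hnorm_le rho0 (M_family HP HP0 Hh Hr)); first by apply Rmult_le_pos => //; apply Rmult_le_pos.
move=> z Hz xi Hxi; apply: Rle_trans (M_rbound HP HP0 Hh Hr Hz Hxi) _.
apply Req_le; rewrite /Kflat; ring.
Qed.

End Operators.

Theorem mainTheorem13 (m d : nat) (rho : R) (r N : nat)
  (B : nat -> mat d d) (B0inv : mat d d) (Lam : mat m m) (mu : R) :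
  0 < rho ->
  (1 <= r)%nat ->
  mmul B0inv (B 0%nat) = mid -> mmul (B 0%nat) B0inv = mid ->
  (opnorm Lam) ^ r <= mu -> mu < 1 ->
  \big[Rplus/0]_(1 <= i < N.+1) (mu ^ i * opnorm (mmul B0inv (B i))) < 1 ->
  (* L is well defined: H_r -> H_r *)
  (forall P, inH rho r P -> inH rho r (Lop N B Lam P)) /\
  (* L is invertible with bounded (linear) inverse M *)
  exists M : (vec m -> vec d) -> (vec m -> vec d),
    (forall P, inH rho r P -> inH rho r (M P)) /\
    (forall P Q, inH rho r P -> inH rho r Q -> (forall x, inD rho x -> P x = Q x) ->
       forall x, inD rho x -> M P x = M Q x) /\
    (forall P Q a b, inH rho r P -> inH rho r Q -> forall x, inD rho x ->
       M (fun y => vadd (vscale a (P y)) (vscale b (Q y))) x =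
       vadd (vscale a (M P x)) (vscale b (M Q x))) /\
    (forall P, inH rho r P -> forall x, inD rho x -> M (Lop N B Lam P) x = P x) /\
    (forall P, inH rho r P -> forall x, inD rho x -> Lop N B Lam (M P) x = P x) /\
    (exists C, 0 <= C /\ forall P, inH rho r P -> Hnorm rho r (M P) <= C * Hnorm rho r P).
Proof.
move=> rho0 _ HBl HBr Hlam Hmu Hq0.
split; first by move=> P; exact: (Lop_inH N B Hlam Hmu).
exists (Mop N B B0inv Lam); split; [|split; [|split; [|split; [|split]]]].
- move=> P; exact: (Mop_inH rho0 Hlam Hmu Hq0).
- move=> P Q _ _; exact: (Mop_ext N B B0inv Hlam Hmu).
- move=> P Q a b; exact: (Mop_linear rho0 Hlam Hmu Hq0).
- move=> P; exact: (Mop_Lop rho0 HBl HBr Hlam Hmu Hq0).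
- move=> P; exact: (Lop_Mop rho0 HBr Hlam Hmu Hq0).
- exact: (Mop_bounded rho0 Hlam Hmu Hq0).
Qed.
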